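(* Let $0<\lambda\le1$, $f\in\mathcal U(\lambda)$ and $a_2=f''(0)/2$. If $\mu$ is a complex number with $|\mu|\le 1-\lambda$ and $a_2+\mu\ne 0$, then $-\dfrac{1}{a_2+\mu}\notin f(\mathbb D)$.
   Context: $\mathbb D=\{z\in\mathbb C:|z|<1\}$. $\mathcal A$ is the class of functions $f$ analytic in $\mathbb D$ with $f(z)=z+\sum_{k\ge2}a_kz^k$. For $f\in\mathcal A$ with $f(z)\ne0$ for $z\in\mathbb D\setminus\{0\}$, set $U_f(z)=\left(\frac{z}{f(z)}\right)^2f'(z)-1$. For $0<\lambda\le1$, $\mathcal U(\lambda)$ is the class of such $f\in\mathcal A$ with $|U_f(z)|<\lambda$ for all $z\in\mathbb D$. *)

From Stdlib Require Import Reals.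
From Coquelicot Require Import Coquelicot.
Open Scope R_scope.

Definition in_disk (z : C) : Prop := Cmod z < 1.

Definition has_cderiv_on_disk (f f' : C -> C) : Prop :=
  forall z : C, in_disk z -> @is_derive C_AbsRing C_NormedModule f z (f' z).

Definition classA (f f' : C -> C) : Prop :=
  has_cderiv_on_disk f f' /\ f (RtoC 0) = RtoC 0 /\ f' (RtoC 0) = RtoC 1.

Definition U_f (f f' : C -> C) (z : C) : C :=
  Cminus (Cmult (Cpow (Cdiv z (f z)) 2) (f' z)) (RtoC 1).

(** Class U(lambda): f in A, f(z) <> 0 on D \ {0}, |U_f(z)| < lambda on D
    (at z = 0, U_f is understood by its removable-singularity value 0,
    so the bound is imposed for z <> 0; it holds trivially at 0). *)
Definition classU (lambda : R) (f f' : C -> C) : Prop :=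
  classA f f' /\
  (forall z : C, in_disk z -> z <> RtoC 0 -> f z <> RtoC 0) /\
  (forall z : C, in_disk z -> z <> RtoC 0 -> Cmod (U_f f f' z) < lambda).

(* Put g(z) = z / f(z), which is holomorphic and zero-free in the disk with g(0) = 1 and
   g'(0) = -a2, and h(z) = (g(z) - 1) / z = 1/f(z) - 1/z, so that h(0) = -a2 and
   h'(z) = -U_f(z) / z^2.  By the maximum modulus principle |h'| <= lambda in the disk, hence
   |h(z) + a2| <= lambda |z|.  If f(z) = -1/(a2 + mu), then h(z) + a2 = -(1 + mu z) / z, so
   |1 + mu z| <= lambda |z|^2, while |1 + mu z| >= 1 - (1 - lambda) |z| > lambda |z|^2.
   Holomorphy of h across 0 comes from writing h as a Cauchy integral; the maximum modulus
   principle follows from Cauchy's integral formula applied to the powers of h', and the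
   integral formula from Goursat's bisection argument on the linear homotopy between two circles. *)

From Stdlib Require Import Reals Lra.
From Coquelicot Require Import Coquelicot.
Open Scope R_scope.

(** * Derivatives and continuity *)

(* Epsilon-delta forms of Coquelicot's [is_derive] and [continuous] for maps [C -> C] and paths [R -> C]. *)
Definition has_cderiv (F : C -> C) (z l : C) : Prop :=
  forall eps, 0 < eps -> exists del, 0 < del /\
    forall w, Cmod (w - z) < del -> Cmod (F w - F z - l * (w - z))%C <= eps * Cmod (w - z).

Definition has_pderiv (p : R -> C) (t : R) (l : C) : Prop :=
  forall eps, 0 < eps -> exists del, 0 < del /\
    forall s, Rabs (s - t) < del -> Cmod (p s - p t - RtoC (s - t) * l)%C <= eps * Rabs (s - t).

Definition ccont_at (F : C -> C) (z : C) : Prop :=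
  forall eps, 0 < eps -> exists del, 0 < del /\
    forall w, Cmod (w - z) < del -> Cmod (F w - F z) < eps.

Definition pcont_at (p : R -> C) (t : R) : Prop :=
  forall eps, 0 < eps -> exists del, 0 < del /\
    forall s, Rabs (s - t) < del -> Cmod (p s - p t) < eps.

Lemma Cminus_0_r (x : C) : (x - RtoC 0)%C = x.
Proof. ring. Qed.

Lemma Cmod_minus_sym (a b : C) : Cmod (a - b) = Cmod (b - a).
Proof. replace (a - b)%C with (- (b - a))%C by ring. apply Cmod_opp. Qed.

Lemma Cmod_triangle3 (a b c : C) : Cmod (a + b + c) <= Cmod a + Cmod b + Cmod c.
Proof. eapply Rle_trans; [apply Cmod_triangle|]. pose proof (Cmod_triangle a b). lra. Qed.

Lemma Cmod_minus_le (a b : C) : Cmod (a - b) <= Cmod a + Cmod b.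
Proof. eapply Rle_trans; [apply Cmod_triangle|]. rewrite Cmod_opp. lra. Qed.

Lemma Cmod_rev_triangle (a b : C) : Cmod a - Cmod b <= Cmod (a - b).
Proof. replace a with (a - b + b)%C at 1 by ring. pose proof (Cmod_triangle (a - b) b). lra. Qed.

Lemma Cmod_eq_of_le_all (a b : C) : (forall eta, 0 < eta -> Cmod (a - b) <= eta) -> a = b.
Proof.
  intros H. destruct (Req_dec (Cmod (a - b)) 0) as [Z|Z].
  - apply Cmod_eq_0 in Z. replace a with (a - b + b)%C by ring. rewrite Z. ring.
  - pose proof (Cmod_ge_0 (a - b)). specialize (H (Cmod (a - b) / 2) ltac:(lra)). lra.
Qed.

Lemma Cpow_neq_0 (x : C) (m : nat) : x <> RtoC 0 -> (x ^ m)%C <> RtoC 0.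
Proof.
  intros Hx E. apply (pow_nonzero (Cmod x) m).
  - intro Z. apply Hx, Cmod_eq_0, Z.
  - rewrite <- Cmod_pow, E. apply Cmod_0.
Qed.

Lemma scal_C_R (r : R) (y : C) : @scal R_AbsRing C_R_NormedModule r y = (RtoC r * y)%C.
Proof. destruct y. apply injective_projections; simpl; unfold scal; simpl; unfold mult; simpl; ring. Qed.

Lemma norm_C_R (x : C) : @norm R_AbsRing C_R_NormedModule x = Cmod x.
Proof.
  destruct x as [a b]. unfold norm; simpl. unfold prod_norm, Cmod. simpl. unfold norm; simpl. unfold abs; simpl.
  f_equal. rewrite !Rmult_1_r, <- !Rabs_mult, !Rabs_right; try reflexivity; apply Rle_ge, Rle_0_sqr.
Qed.

Lemma scal_C_C (u l : C) : @scal C_AbsRing (AbsRing_NormedModule C_AbsRing) u l = (l * u)%C.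
Proof. unfold scal; simpl; unfold mult; simpl. ring. Qed.

Lemma has_cderiv_iff_is_derive F z l :
  has_cderiv F z l <-> @is_derive C_AbsRing (AbsRing_NormedModule C_AbsRing) F z l.
Proof.
  split.
  - intros H. split; [apply is_linear_scal_l|].
    intros x Hx eps.
    apply (@is_filter_lim_locally_unique C_AbsRing (AbsRing_NormedModule C_AbsRing)) in Hx. subst x.
    destruct (H eps (cond_pos eps)) as [del [Hdel Hw]].
    exists (mkposreal del Hdel). intros w B.
    change (Cmod (minus (minus (F w) (F z)) (scal (minus w z) l)) <= eps * Cmod (minus w z)).
    rewrite scal_C_C. exact (Hw w B).
  - intros [_ Hd] eps Heps.
    destruct (Hd z (fun P H => H) (mkposreal eps Heps)) as [e He].
    exists e. split; [apply cond_pos|]. intros w Hw.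
    specialize (He w Hw). simpl in He. rewrite scal_C_C in He. exact He.
Qed.

Lemma is_derive_has_cderiv F z l :
  @is_derive C_AbsRing C_NormedModule F z l -> has_cderiv F z l.
Proof.
  intros [_ Hd] eps Heps.
  destruct (Hd z (fun P H => H) (mkposreal eps Heps)) as [e He].
  exists e. split; [apply cond_pos|]. intros w Hw.
  specialize (He w Hw). simpl in He.
  replace (l * (w - z))%C with (scal (minus w z) l)
    by (unfold scal; simpl; unfold mult; simpl; unfold minus, plus, opp; simpl; ring).
  exact He.
Qed.

Lemma has_pderiv_is_derive p t l :
  has_pderiv p t l -> @is_derive R_AbsRing C_R_NormedModule p t l.
Proof.
  intros H. split; [apply is_linear_scal_l|].
  intros x Hx eps.
  apply (@is_filter_lim_locally_unique R_AbsRing (AbsRing_NormedModule R_AbsRing)) in Hx. subst x.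
  destruct (H eps (cond_pos eps)) as [del [Hdel Hw]].
  exists (mkposreal del Hdel). intros s B.
  change (Rabs (s - t) < del) in B.
  rewrite norm_C_R, scal_C_R. exact (Hw s B).
Qed.

Lemma pcont_at_continuous p t : pcont_at p t -> continuous p t.
Proof.
  intros H. apply filterlim_locally. intros eps.
  destruct (H eps (cond_pos eps)) as [del [Hdel Hw]].
  exists (mkposreal del Hdel). intros s B. change (Rabs (s - t) < del) in B.
  apply C_NormedModule_mixin_compat1, Hw, B.
Qed.

Lemma pcont_at_continuity_pt_Cmod p t : pcont_at p t -> continuity_pt (fun s => Cmod (p s)) t.
Proof.
  intros H eps Heps. destruct (H eps Heps) as [del [Hdel Hw]].
  exists del. split; [lra|]. intros s [_ Hs]. simpl in Hs. unfold R_dist in *.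
  specialize (Hw s Hs). pose proof (Cmod_rev_triangle (p s) (p t)).
  pose proof (Cmod_rev_triangle (p t) (p s)). rewrite Cmod_minus_sym in H1.
  apply Rabs_def1; lra.
Qed.

Lemma has_cderiv_cont F z l : has_cderiv F z l -> ccont_at F z.
Proof.
  intros H eps Heps. destruct (H 1 Rlt_0_1) as [del [Hdel Hw]].
  pose proof (Cmod_ge_0 l).
  exists (Rmin del (eps / (Cmod l + 2))). split.
  { apply Rmin_pos; auto. apply Rdiv_lt_0_compat; lra. }
  intros w Hw'.
  assert (Hd : Cmod (w - z) < del) by (eapply Rlt_le_trans; [exact Hw'|apply Rmin_l]).
  assert (He : Cmod (w - z) < eps / (Cmod l + 2)) by (eapply Rlt_le_trans; [exact Hw'|apply Rmin_r]).
  specialize (Hw w Hd). pose proof (Cmod_ge_0 (w - z)).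
  assert (Cmod (w - z) * (Cmod l + 2) < eps).
  { apply (Rmult_lt_compat_r (Cmod l + 2)) in He; [|lra].
    unfold Rdiv in He. rewrite Rmult_assoc, Rinv_l in He; lra. }
  replace (F w - F z)%C with ((F w - F z - l * (w - z)) + l * (w - z))%C by ring.
  eapply Rle_lt_trans; [apply Cmod_triangle|]. rewrite Cmod_mult. nra.
Qed.

Lemma has_pderiv_cont p t l : has_pderiv p t l -> pcont_at p t.
Proof.
  intros H eps Heps. destruct (H 1 Rlt_0_1) as [del [Hdel Hw]].
  pose proof (Cmod_ge_0 l).
  exists (Rmin del (eps / (Cmod l + 2))). split.
  { apply Rmin_pos; auto. apply Rdiv_lt_0_compat; lra. }
  intros s Hs'.
  assert (Hd : Rabs (s - t) < del) by (eapply Rlt_le_trans; [exact Hs'|apply Rmin_l]).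
  assert (He : Rabs (s - t) < eps / (Cmod l + 2)) by (eapply Rlt_le_trans; [exact Hs'|apply Rmin_r]).
  specialize (Hw s Hd). pose proof (Rabs_pos (s - t)).
  assert (Rabs (s - t) * (Cmod l + 2) < eps).
  { apply (Rmult_lt_compat_r (Cmod l + 2)) in He; [|lra].
    unfold Rdiv in He. rewrite Rmult_assoc, Rinv_l in He; lra. }
  replace (p s - p t)%C with ((p s - p t - RtoC (s - t) * l) + RtoC (s - t) * l)%C by ring.
  eapply Rle_lt_trans; [apply Cmod_triangle|]. rewrite Cmod_mult, Cmod_R. nra.
Qed.

Lemma has_cderiv_eq F z l l' : has_cderiv F z l -> l = l' -> has_cderiv F z l'.
Proof. intros H E; subst; auto. Qed.

Lemma has_cderiv_loc F G z l r : 0 < r -> (forall w, Cmod (w - z) < r -> F w = G w) ->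
  has_cderiv F z l -> has_cderiv G z l.
Proof.
  intros Hr HFG H eps Heps. destruct (H eps Heps) as [del [Hdel Hw]].
  exists (Rmin del r). split; [apply Rmin_pos; auto|]. intros w Hw'.
  assert (Hz : F z = G z) by (apply HFG; replace (z - z)%C with (RtoC 0) by ring; rewrite Cmod_0; auto).
  rewrite <- Hz, <- HFG by (eapply Rlt_le_trans; [exact Hw'|apply Rmin_r]).
  apply Hw. eapply Rlt_le_trans; [exact Hw'|apply Rmin_l].
Qed.

Lemma has_cderiv_unique F z l1 l2 : has_cderiv F z l1 -> has_cderiv F z l2 -> l1 = l2.
Proof.
  intros H1 H2. apply Cmod_eq_of_le_all. intros eta Heta.
  destruct (H1 (eta / 2) ltac:(lra)) as [e1 [He1 W1]].
  destruct (H2 (eta / 2) ltac:(lra)) as [e2 [He2 W2]].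
  set (h := Rmin e1 e2 / 2).
  pose proof (Rmin_pos e1 e2 He1 He2). pose proof (Rmin_l e1 e2). pose proof (Rmin_r e1 e2).
  assert (Ew : Cmod (z + RtoC h - z) = h).
  { replace (z + RtoC h - z)%C with (RtoC h) by ring. rewrite Cmod_R, Rabs_right; unfold h; lra. }
  specialize (W1 (z + RtoC h)%C ltac:(rewrite Ew; unfold h; lra)).
  specialize (W2 (z + RtoC h)%C ltac:(rewrite Ew; unfold h; lra)). rewrite Ew in W1, W2.
  assert (Hdiff : Cmod ((l1 - l2) * (z + RtoC h - z)) <= eta * h).
  { replace ((l1 - l2) * (z + RtoC h - z))%C with
      ((F (z + RtoC h) - F z - l2 * (z + RtoC h - z)) - (F (z + RtoC h) - F z - l1 * (z + RtoC h - z)))%C by ring.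
    eapply Rle_trans; [apply Cmod_minus_le|]. lra. }
  rewrite Cmod_mult, Ew in Hdiff. assert (0 < h) by (unfold h; lra).
  apply (Rmult_le_reg_r h); lra.
Qed.

Lemma has_cderiv_const (c z : C) : has_cderiv (fun _ => c) z (RtoC 0).
Proof. apply has_cderiv_iff_is_derive, (@is_derive_const C_AbsRing (AbsRing_NormedModule C_AbsRing)). Qed.

Lemma has_cderiv_id (z : C) : has_cderiv (fun w => w) z (RtoC 1).
Proof. apply has_cderiv_iff_is_derive. exact (@is_derive_id C_AbsRing z). Qed.

Lemma has_cderiv_plus F G z a b :
  has_cderiv F z a -> has_cderiv G z b -> has_cderiv (fun w => F w + G w)%C z (a + b)%C.
Proof. rewrite !has_cderiv_iff_is_derive. apply (@is_derive_plus C_AbsRing). Qed.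

Lemma has_cderiv_minus F G z a b :
  has_cderiv F z a -> has_cderiv G z b -> has_cderiv (fun w => F w - G w)%C z (a - b)%C.
Proof. rewrite !has_cderiv_iff_is_derive. apply (@is_derive_minus C_AbsRing). Qed.

Lemma has_cderiv_mult F G z a b : has_cderiv F z a -> has_cderiv G z b ->
  has_cderiv (fun w => F w * G w)%C z (a * G z + F z * b)%C.
Proof.
  rewrite !has_cderiv_iff_is_derive. intros. apply (@is_derive_mult C_AbsRing); auto.
  intros; apply Cmult_comm.
Qed.

Lemma has_cderiv_comp G F z a b :
  has_cderiv G (F z) a -> has_cderiv F z b -> has_cderiv (fun w => G (F w)) z (b * a)%C.
Proof. rewrite !has_cderiv_iff_is_derive. apply (@is_derive_comp C_AbsRing). Qed.

Lemma has_cderiv_scal (c : C) F z a : has_cderiv F z a -> has_cderiv (fun w => c * F w)%C z (c * a)%C.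
Proof.
  intros H. eapply has_cderiv_eq; [apply (has_cderiv_mult (fun _ => c) F); [apply has_cderiv_const|exact H]|]. ring.
Qed.

Lemma has_cderiv_affine (al be w0 z : C) : has_cderiv (fun w => al + be * (w - w0))%C z be.
Proof.
  eapply has_cderiv_eq.
  - apply has_cderiv_plus; [apply has_cderiv_const|].
    apply has_cderiv_scal, has_cderiv_minus; [apply has_cderiv_id|apply has_cderiv_const].
  - ring.
Qed.

Lemma has_cderiv_Cinv (z : C) : z <> RtoC 0 -> has_cderiv (fun w => / w)%C z (- / (z * z))%C.
Proof.
  intros Hz eps Heps. set (m := Cmod z). assert (Hm : 0 < m) by (apply Cmod_gt_0; auto).
  exists (Rmin (m / 2) (eps * m * m * m / 2)). split.
  { apply Rmin_pos; [lra|]. apply Rdiv_lt_0_compat; [|lra]. repeat apply Rmult_lt_0_compat; auto. }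
  intros w Hw. assert (Hw1 : Cmod (w - z) < m / 2) by (eapply Rlt_le_trans; [exact Hw|apply Rmin_l]).
  assert (Hw2 : Cmod (w - z) < eps * m * m * m / 2) by (eapply Rlt_le_trans; [exact Hw|apply Rmin_r]).
  assert (Hwm : m / 2 <= Cmod w).
  { pose proof (Cmod_rev_triangle z w). rewrite Cmod_minus_sym in H. fold m in H. lra. }
  assert (Hw0 : w <> RtoC 0) by (intro X; rewrite X, Cmod_0 in Hwm; lra).
  replace (/ w - / z - - / (z * z) * (w - z))%C with ((w - z) * (w - z) / (z * z * w))%C by (field; auto).
  rewrite Cmod_div by (repeat apply Cmult_neq_0; auto). rewrite !Cmod_mult. fold m.
  pose proof (Cmod_ge_0 (w - z)).
  apply Rle_div_l. { apply Rmult_lt_0_compat; [nra|lra]. }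
  assert (0 <= (eps * (m * m)) * (Cmod w - m / 2)) by (apply Rmult_le_pos; nra).
  assert (Cmod (w - z) <= eps * m * m * Cmod w) by nra.
  nra.
Qed.

Lemma has_cderiv_inv F z a : F z <> RtoC 0 -> has_cderiv F z a ->
  has_cderiv (fun w => / F w)%C z (- a / (F z * F z))%C.
Proof.
  intros Hz H. replace (- a / (F z * F z))%C with (a * (- / (F z * F z)))%C by (field; auto).
  apply (has_cderiv_comp (fun w => / w)%C F z); auto. apply has_cderiv_Cinv; auto.
Qed.

Lemma has_cderiv_pow F z a (n : nat) : has_cderiv F z a ->
  has_cderiv (fun w => F w ^ n)%C z (INR n * F z ^ (pred n) * a)%C.
Proof.
  intros H. induction n as [|n IH].
  - eapply has_cderiv_eq; [apply (has_cderiv_const (RtoC 1))|]. simpl. ring.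
  - eapply has_cderiv_eq; [apply (has_cderiv_mult F (fun w => F w ^ n)%C); [exact H|exact IH]|].
    rewrite S_INR, RtoC_plus. destruct n; simpl; ring.
Qed.

Lemma has_pderiv_eq p t l l' : has_pderiv p t l -> l = l' -> has_pderiv p t l'.
Proof. intros H E; subst; auto. Qed.

Lemma has_pderiv_ext p q t l : (forall s, p s = q s) -> has_pderiv p t l -> has_pderiv q t l.
Proof.
  intros E H eps Heps. destruct (H eps Heps) as [d [Hd W]].
  exists d; split; auto. intros; rewrite <- !E; auto.
Qed.

Lemma has_pderiv_comp (G : C -> C) (p : R -> C) t a b :
  has_cderiv G (p t) a -> has_pderiv p t b -> has_pderiv (fun s => G (p s)) t (a * b)%C.
Proof.
  intros HG Hp eps Heps.
  set (K := Cmod b + 1). set (A := Cmod a + 1).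
  assert (HK : 0 < K) by (unfold K; pose proof (Cmod_ge_0 b); lra).
  assert (HA : 0 < A) by (unfold A; pose proof (Cmod_ge_0 a); lra).
  destruct (Hp 1 Rlt_0_1) as [d0 [Hd0 W0]].
  destruct (HG (eps / (2 * K)) ltac:(apply Rdiv_lt_0_compat; lra)) as [d1 [Hd1 W1]].
  destruct (Hp (eps / (2 * A)) ltac:(apply Rdiv_lt_0_compat; lra)) as [d2 [Hd2 W2]].
  exists (Rmin (Rmin d0 d2) (d1 / K)). split.
  { repeat apply Rmin_pos; auto. apply Rdiv_lt_0_compat; lra. }
  intros s Hs.
  pose proof (Rmin_l (Rmin d0 d2) (d1 / K)). pose proof (Rmin_r (Rmin d0 d2) (d1 / K)).
  pose proof (Rmin_l d0 d2). pose proof (Rmin_r d0 d2). pose proof (Rabs_pos (s - t)).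
  specialize (W0 s ltac:(lra)). specialize (W2 s ltac:(lra)).
  assert (Hp1 : Cmod (p s - p t) <= K * Rabs (s - t)).
  { replace (p s - p t)%C with ((p s - p t - RtoC (s - t) * b) + RtoC (s - t) * b)%C by ring.
    eapply Rle_trans; [apply Cmod_triangle|]. rewrite Cmod_mult, Cmod_R. unfold K. nra. }
  assert (Hp2 : Cmod (p s - p t) < d1).
  { assert (K * Rabs (s - t) < K * (d1 / K)) by (apply Rmult_lt_compat_l; lra).
    replace (K * (d1 / K)) with d1 in H4 by (field; lra). lra. }
  specialize (W1 (p s) Hp2).
  replace (G (p s) - G (p t) - RtoC (s - t) * (a * b))%C with
    ((G (p s) - G (p t) - a * (p s - p t)) + a * (p s - p t - RtoC (s - t) * b))%C by ring.
  eapply Rle_trans; [apply Cmod_triangle|]. rewrite Cmod_mult.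
  assert (E1 : eps / (2 * K) * Cmod (p s - p t) <= eps / 2 * Rabs (s - t)).
  { apply Rle_trans with (eps / (2 * K) * (K * Rabs (s - t))).
    - apply Rmult_le_compat_l; auto. apply Rlt_le, Rdiv_lt_0_compat; lra.
    - right. field. lra. }
  assert (E2 : Cmod a * Cmod (p s - p t - RtoC (s - t) * b) <= eps / 2 * Rabs (s - t)).
  { apply Rle_trans with (A * (eps / (2 * A) * Rabs (s - t))).
    - apply Rmult_le_compat; auto using Cmod_ge_0. unfold A; lra.
    - right. field. lra. }
  lra.
Qed.

Lemma has_pderiv_plus p q t a b :
  has_pderiv p t a -> has_pderiv q t b -> has_pderiv (fun s => p s + q s)%C t (a + b)%C.
Proof.
  intros Hp Hq eps Heps.
  destruct (Hp (eps / 2) ltac:(lra)) as [d1 [Hd1 W1]]. destruct (Hq (eps / 2) ltac:(lra)) as [d2 [Hd2 W2]].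
  exists (Rmin d1 d2). split; [apply Rmin_pos; auto|]. intros s Hs.
  specialize (W1 s ltac:(eapply Rlt_le_trans; [exact Hs|apply Rmin_l])).
  specialize (W2 s ltac:(eapply Rlt_le_trans; [exact Hs|apply Rmin_r])).
  replace (p s + q s - (p t + q t) - RtoC (s - t) * (a + b))%C with
    ((p s - p t - RtoC (s - t) * a) + (q s - q t - RtoC (s - t) * b))%C by ring.
  eapply Rle_trans; [apply Cmod_triangle|]. lra.
Qed.

Lemma has_pderiv_const (c : C) t : has_pderiv (fun _ => c) t (RtoC 0).
Proof.
  intros eps Heps. exists 1; split; [lra|]. intros s _.
  replace (c - c - RtoC (s - t) * 0)%C with (RtoC 0) by ring.
  rewrite Cmod_0. pose proof (Rabs_pos (s - t)). nra.
Qed.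

Lemma has_pderiv_id t : has_pderiv (fun s => RtoC s) t (RtoC 1).
Proof.
  intros eps Heps. exists 1; split; [lra|]. intros s _.
  replace (RtoC s - RtoC t - RtoC (s - t) * 1)%C with (RtoC 0) by (rewrite RtoC_minus; ring).
  rewrite Cmod_0. pose proof (Rabs_pos (s - t)). nra.
Qed.

Lemma has_pderiv_scal (c : C) p t a : has_pderiv p t a -> has_pderiv (fun s => c * p s)%C t (c * a)%C.
Proof.
  apply (has_pderiv_comp (fun w => c * w)%C p t c a).
  eapply has_cderiv_eq; [apply has_cderiv_scal, has_cderiv_id|]. ring.
Qed.

Lemma has_pderiv_minus p q t a b :
  has_pderiv p t a -> has_pderiv q t b -> has_pderiv (fun s => p s - q s)%C t (a - b)%C.
Proof.
  intros Hp Hq. apply has_pderiv_plus; auto.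
  apply has_pderiv_ext with (fun s => (-1) * q s)%C; [intros; ring|].
  eapply has_pderiv_eq; [apply has_pderiv_scal, Hq|]. ring.
Qed.

Lemma has_pderiv_line (w : C) t : has_pderiv (fun s => RtoC s * w)%C t w.
Proof.
  apply has_pderiv_ext with (fun s => w * RtoC s)%C; [intros; ring|].
  eapply has_pderiv_eq; [apply has_pderiv_scal, has_pderiv_id|]. ring.
Qed.

Lemma has_pderiv_pair (f g : R -> R) t a b :
  derivable_pt_lim f t a -> derivable_pt_lim g t b -> has_pderiv (fun s => (f s, g s)) t (a, b).
Proof.
  intros Hf Hg eps Heps.
  destruct (Hf (eps / 2) ltac:(lra)) as [d1 W1]. destruct (Hg (eps / 2) ltac:(lra)) as [d2 W2].
  exists (Rmin d1 d2). split; [apply Rmin_pos; apply cond_pos|]. intros s Hs.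
  destruct (Req_dec s t) as [E|E].
  { subst. replace ((f t, g t) - (f t, g t) - RtoC (t - t) * (a, b))%C with (RtoC 0)
      by (apply injective_projections; simpl; ring).
    rewrite Cmod_0, Rminus_eq_0, Rabs_R0; lra. }
  assert (Hh : s - t <> 0) by lra.
  specialize (W1 (s - t) Hh ltac:(eapply Rlt_le_trans; [exact Hs|apply Rmin_l])).
  specialize (W2 (s - t) Hh ltac:(eapply Rlt_le_trans; [exact Hs|apply Rmin_r])).
  replace (t + (s - t)) with s in W1, W2 by ring.
  assert (A1 : Rabs (f s - f t - (s - t) * a) <= eps / 2 * Rabs (s - t)).
  { replace (f s - f t - (s - t) * a) with (((f s - f t) / (s - t) - a) * (s - t)) by (field; auto).
    rewrite Rabs_mult. apply Rmult_le_compat_r; [apply Rabs_pos|lra]. }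
  assert (A2 : Rabs (g s - g t - (s - t) * b) <= eps / 2 * Rabs (s - t)).
  { replace (g s - g t - (s - t) * b) with (((g s - g t) / (s - t) - b) * (s - t)) by (field; auto).
    rewrite Rabs_mult. apply Rmult_le_compat_r; [apply Rabs_pos|lra]. }
  replace ((f s, g s) - (f t, g t) - RtoC (s - t) * (a, b))%C with
    (RtoC (f s - f t - (s - t) * a) + Ci * RtoC (g s - g t - (s - t) * b))%C
    by (apply injective_projections; simpl; ring).
  eapply Rle_trans; [apply Cmod_triangle|]. rewrite Cmod_mult, Cmod_Ci, !Cmod_R. lra.
Qed.

Definition expi (t : R) : C := (cos t, sin t).

Lemma has_pderiv_expi t : has_pderiv expi t (Ci * expi t)%C.
Proof.
  replace (Ci * expi t)%C with (- sin t, cos t) by (unfold expi; apply injective_projections; simpl; ring).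
  apply has_pderiv_pair; [apply derivable_pt_lim_cos|apply derivable_pt_lim_sin].
Qed.

Lemma Cmod_expi t : Cmod (expi t) = 1.
Proof.
  unfold expi, Cmod; simpl. rewrite !Rmult_1_r. pose proof (sin2_cos2 t) as E. unfold Rsqr in E.
  rewrite Rplus_comm, E. apply sqrt_1.
Qed.

Lemma expi_neq_0 t : expi t <> RtoC 0.
Proof. intro X. pose proof (Cmod_expi t) as E. rewrite X, Cmod_0 in E. lra. Qed.

Lemma expi_2PI : expi (2 * PI) = expi 0.
Proof. unfold expi. rewrite cos_0, sin_0, cos_2PI, sin_2PI. auto. Qed.

Lemma Cmod_circle (rho : R) t : 0 <= rho -> Cmod (RtoC rho * expi t) = rho.
Proof. intros H. rewrite Cmod_mult, Cmod_R, Cmod_expi, Rabs_right; lra. Qed.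

Lemma circle_neq_0 (rho : R) t : 0 < rho -> (RtoC rho * expi t)%C <> RtoC 0.
Proof. intros H X. pose proof (Cmod_circle rho t ltac:(lra)) as E. rewrite X, Cmod_0 in E. lra. Qed.

Lemma circle_dist_ge (rho : R) (z : C) t : 0 <= rho -> rho - Cmod z <= Cmod (RtoC rho * expi t - z).
Proof. intros H. rewrite <- (Cmod_circle rho t H) at 1. apply Cmod_rev_triangle. Qed.

Lemma circle_minus_neq_0 (rho : R) (w : C) t : Cmod w < rho -> (RtoC rho * expi t - w)%C <> RtoC 0.
Proof.
  intros Hw X. pose proof (Cmod_ge_0 w).
  pose proof (circle_dist_ge rho w t ltac:(lra)) as E. rewrite X, Cmod_0 in E. lra.
Qed.

Lemma pcont_comp (G : C -> C) p t : ccont_at G (p t) -> pcont_at p t -> pcont_at (fun s => G (p s)) t.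
Proof.
  intros HG Hp eps Heps. destruct (HG eps Heps) as [d1 [Hd1 W1]]. destruct (Hp d1 Hd1) as [d2 [Hd2 W2]].
  exists d2; split; auto.
Qed.

Lemma pcont_const (c : C) t : pcont_at (fun _ => c) t.
Proof.
  intros eps Heps. exists 1. split; [lra|]. intros.
  replace (c - c)%C with (RtoC 0) by ring. rewrite Cmod_0; lra.
Qed.

Lemma pcont_mult p q t : pcont_at p t -> pcont_at q t -> pcont_at (fun s => p s * q s)%C t.
Proof.
  intros Hp Hq eps Heps.
  set (A := Cmod (p t) + 1). set (B := Cmod (q t) + 1).
  pose proof (Cmod_ge_0 (p t)). pose proof (Cmod_ge_0 (q t)).
  set (e := Rmin 1 (eps / (A + B))).
  assert (He : 0 < e) by (apply Rmin_pos; [lra|apply Rdiv_lt_0_compat; unfold A, B; lra]).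
  assert (He1 : e <= 1) by apply Rmin_l.
  assert (He2 : e * (A + B) <= eps).
  { apply Rle_trans with (eps / (A + B) * (A + B)).
    - apply Rmult_le_compat_r; [unfold A, B; lra|apply Rmin_r].
    - right; field; unfold A, B; lra. }
  destruct (Hp e He) as [d1 [Hd1 W1]]. destruct (Hq e He) as [d2 [Hd2 W2]].
  exists (Rmin d1 d2). split; [apply Rmin_pos; auto|]. intros s Hs.
  specialize (W1 s ltac:(eapply Rlt_le_trans; [exact Hs|apply Rmin_l])).
  specialize (W2 s ltac:(eapply Rlt_le_trans; [exact Hs|apply Rmin_r])).
  replace (p s * q s - p t * q t)%C with
    ((p s - p t) * (q s - q t) + (p s - p t) * q t + p t * (q s - q t))%C by ring.
  eapply Rle_lt_trans; [apply Cmod_triangle3|]. rewrite !Cmod_mult.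
  pose proof (Cmod_ge_0 (p s - p t)). pose proof (Cmod_ge_0 (q s - q t)).
  assert (Cmod (p s - p t) * Cmod (q s - q t) <= e * 1) by (apply Rmult_le_compat; lra).
  assert (Cmod (p s - p t) * Cmod (q t) <= e * Cmod (q t)) by (apply Rmult_le_compat_r; lra).
  assert (Cmod (p t) * Cmod (q s - q t) < Cmod (p t) * e + e) by nra.
  unfold A, B in He2. nra.
Qed.

Lemma pcont_circle (Phi : C -> C) (rho : R) t : ccont_at Phi (RtoC rho * expi t)%C ->
  pcont_at (fun th => Phi (RtoC rho * expi th))%C t.
Proof.
  intros H. apply (pcont_comp Phi (fun th => RtoC rho * expi th)%C); auto.
  eapply has_pderiv_cont, has_pderiv_scal, has_pderiv_expi.
Qed.

(** * Integrals along paths *)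

Definition CInt (p : R -> C) (a b : R) : C := @RInt C_R_CompleteNormedModule p a b.
Definition ex_CInt (p : R -> C) (a b : R) : Prop := @ex_RInt C_R_NormedModule p a b.

Lemma CInt_correct p a b : ex_CInt p a b -> @is_RInt C_R_NormedModule p a b (CInt p a b).
Proof. apply (@RInt_correct C_R_CompleteNormedModule). Qed.

Lemma CInt_unique p a b l : @is_RInt C_R_NormedModule p a b l -> CInt p a b = l.
Proof. apply (@is_RInt_unique C_R_CompleteNormedModule). Qed.

Lemma ex_CInt_pcont p a b : a <= b -> (forall t, a <= t <= b -> pcont_at p t) -> ex_CInt p a b.
Proof.
  intros Hab H. apply (@ex_RInt_continuous C_R_CompleteNormedModule).
  intros z Hz. rewrite Rmin_left, Rmax_right in Hz by lra. apply pcont_at_continuous, H, Hz.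
Qed.

Lemma is_RInt_Cmult (c : C) (p : R -> C) a b (l : C) :
  @is_RInt C_R_NormedModule p a b l -> @is_RInt C_R_NormedModule (fun t => c * p t)%C a b (c * l)%C.
Proof.
  intros H.
  pose proof (@is_RInt_fct_extend_fst R_NormedModule R_NormedModule p a b l H) as H1.
  pose proof (@is_RInt_fct_extend_snd R_NormedModule R_NormedModule p a b l H) as H2.
  destruct c as [cr ci].
  apply (@is_RInt_fct_extend_pair R_NormedModule R_NormedModule).
  - simpl. apply (@is_RInt_minus R_NormedModule); apply (@is_RInt_scal R_NormedModule); auto.
  - simpl. apply (@is_RInt_plus R_NormedModule); apply (@is_RInt_scal R_NormedModule); auto.
Qed.

Lemma CInt_minus p q a b : ex_CInt p a b -> ex_CInt q a b ->
  CInt (fun t => p t - q t)%C a b = (CInt p a b - CInt q a b)%C.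
Proof. intros Hp Hq. apply CInt_unique, (@is_RInt_minus C_R_NormedModule); apply CInt_correct; auto. Qed.

Lemma CInt_Cmult c p a b : ex_CInt p a b -> CInt (fun t => c * p t)%C a b = (c * CInt p a b)%C.
Proof. intros Hp. apply CInt_unique, is_RInt_Cmult, CInt_correct, Hp. Qed.

Lemma ex_CInt_minus p q a b : ex_CInt p a b -> ex_CInt q a b -> ex_CInt (fun t => p t - q t)%C a b.
Proof. intros Hp Hq. eexists. apply (@is_RInt_minus C_R_NormedModule); apply CInt_correct; auto. Qed.

Lemma ex_CInt_Cmult c p a b : ex_CInt p a b -> ex_CInt (fun t => c * p t)%C a b.
Proof. intros Hp. eexists. apply is_RInt_Cmult, CInt_correct, Hp. Qed.

Lemma CInt_ext p q a b : a <= b -> (forall t, a <= t <= b -> p t = q t) -> CInt p a b = CInt q a b.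
Proof.
  intros Hab H. apply (@RInt_ext C_R_CompleteNormedModule).
  intros x Hx. rewrite Rmin_left, Rmax_right in Hx by lra. apply H; lra.
Qed.

Lemma CInt_Chasles p a b c : ex_CInt p a b -> ex_CInt p b c -> (CInt p a b + CInt p b c)%C = CInt p a c.
Proof. apply (@RInt_Chasles C_R_CompleteNormedModule). Qed.

Lemma CInt_norm_le p a b M : a <= b -> ex_CInt p a b ->
  (forall t, a <= t <= b -> Cmod (p t) <= M) -> Cmod (CInt p a b) <= (b - a) * M.
Proof.
  intros Hab Hp HM. rewrite <- norm_C_R. apply (@norm_RInt_le_const C_R_NormedModule p a b); auto.
  - intros; rewrite norm_C_R; auto.
  - apply CInt_correct, Hp.
Qed.

Lemma CInt_FTC (q p : R -> C) a b : a <= b -> (forall t, a <= t <= b -> has_pderiv q t (p t)) ->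
  (forall t, a <= t <= b -> pcont_at p t) -> CInt p a b = (q b - q a)%C.
Proof.
  intros Hab Hd Hc. apply CInt_unique, (@is_RInt_derive C_R_CompleteNormedModule q p a b).
  - intros x Hx. rewrite Rmin_left, Rmax_right in Hx by lra. apply has_pderiv_is_derive; auto.
  - intros x Hx. rewrite Rmin_left, Rmax_right in Hx by lra. apply pcont_at_continuous; auto.
Qed.

Lemma CInt_const (c : C) a b : a <= b -> CInt (fun _ => c) a b = (RtoC (b - a) * c)%C.
Proof.
  intros Hab. rewrite (CInt_FTC (fun t => RtoC t * c)%C); [|lra| |].
  - rewrite RtoC_minus. ring.
  - intros t _. apply has_pderiv_line.
  - intros; apply pcont_const.
Qed.

Lemma is_derive_of_eps_delta (f : R -> R) t l :
  (forall eps, 0 < eps -> exists del, 0 < del /\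
     forall s, Rabs (s - t) < del -> Rabs (f s - f t - (s - t) * l) <= eps * Rabs (s - t)) ->
  is_derive f t l.
Proof.
  intros H. apply is_derive_Reals. intros eps Heps.
  destruct (H (eps / 2) ltac:(lra)) as [d [Hd W]]. exists (mkposreal d Hd). intros h Hh Hhd. simpl in Hhd.
  specialize (W (t + h) ltac:(replace (t + h - t) with h by ring; auto)).
  replace (t + h - t) with h in W by ring.
  replace ((f (t + h) - f t) / h - l) with ((f (t + h) - f t - h * l) / h) by (field; auto).
  unfold Rdiv. rewrite Rabs_mult, Rabs_inv. apply Rle_lt_trans with (eps / 2 * Rabs h * / Rabs h).
  - apply Rmult_le_compat_r; auto. left. apply Rinv_0_lt_compat, Rabs_pos_lt; auto.
  - field_simplify; [|apply Rabs_no_R0; auto]. lra.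
Qed.

(* Apply the real mean value theorem to [t |-> Re (conj (p b - p a) * p t)]. *)
Lemma path_mean_value_ineq (p dp : R -> C) a b M : a <= b ->
  (forall t, a <= t <= b -> has_pderiv p t (dp t)) ->
  (forall t, a <= t <= b -> Cmod (dp t) <= M) -> Cmod (p b - p a) <= M * (b - a).
Proof.
  intros Hab Hd HM.
  set (c := (p b - p a)%C). set (psi := fun t => Re (Cconj c * p t)%C).
  pose proof (Cmod_ge_0 c) as Hc0.
  assert (Hpsi : forall t, a <= t <= b -> is_derive psi t (Re (Cconj c * dp t)%C)).
  { intros t Ht. apply is_derive_of_eps_delta. intros eps Heps.
    destruct (Hd t Ht (eps / (Cmod c + 1)) ltac:(apply Rdiv_lt_0_compat; lra)) as [d [Hd0 W]].
    exists d; split; auto. intros s Hs. specialize (W s Hs). pose proof (Rabs_pos (s - t)).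
    unfold psi. replace (Re (Cconj c * p s) - Re (Cconj c * p t) - (s - t) * Re (Cconj c * dp t)) with
      (Re (Cconj c * (p s - p t - RtoC (s - t) * dp t))%C) by (simpl; ring).
    eapply Rle_trans; [apply re_le_Cmod|]. rewrite Cmod_mult, Cmod_conj.
    apply Rle_trans with (Cmod c * (eps / (Cmod c + 1) * Rabs (s - t))); [apply Rmult_le_compat_l; lra|].
    apply Rle_trans with ((Cmod c / (Cmod c + 1)) * (eps * Rabs (s - t))); [right; field; lra|].
    rewrite <- (Rmult_1_l (eps * Rabs (s - t))) at 2. apply Rmult_le_compat_r; [nra|].
    apply Rle_div_l; lra. }
  destruct (MVT_gen psi a b (fun t => Re (Cconj c * dp t)%C)) as [x [Hx Hmvt]].
  - intros x Hx. rewrite Rmin_left, Rmax_right in Hx by lra. apply Hpsi; lra.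
  - intros x Hx. rewrite Rmin_left, Rmax_right in Hx by lra.
    apply continuity_pt_filterlim, (@ex_derive_continuous R_AbsRing R_NormedModule).
    eexists. apply Hpsi; auto.
  - rewrite Rmin_left, Rmax_right in Hx by lra.
    assert (Ec : psi b - psi a = Cmod c ^ 2).
    { unfold psi. rewrite Cmod2_alt. unfold c. destruct (p b) as [u v], (p a) as [u1 v1]. simpl. ring. }
    rewrite Ec in Hmvt.
    assert (Cmod c ^ 2 <= Cmod c * M * (b - a)).
    { rewrite Hmvt. apply Rmult_le_compat_r; [lra|]. eapply Rle_trans; [apply Rle_abs|].
      eapply Rle_trans; [apply re_le_Cmod|]. rewrite Cmod_mult, Cmod_conj.
      apply Rmult_le_compat_l; [lra|]. apply HM; lra. }
    fold c. destruct (Req_dec (Cmod c) 0) as [Z|Z]; [rewrite Z; pose proof (HM a ltac:(lra)); pose proof (Cmod_ge_0 (dp a)); nra|]. nra.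
Qed.

(** * Cauchy's theorem for homotopies *)

Lemma nested_intervals (u v : nat -> R) :
  (forall n m, (n <= m)%nat -> u n <= u m /\ v m <= v n) -> (forall n, u n <= v n) ->
  exists x, forall n, u n <= x <= v n.
Proof.
  intros Hm Huv.
  destruct (completeness (fun x => exists n, x = u n)) as [x [Hub Hlub]].
  { exists (v 0%nat). intros y [n ->]. pose proof (Hm 0%nat n (Nat.le_0_l n)). specialize (Huv n). lra. }
  { exists (u 0%nat). exists 0%nat. auto. }
  exists x. intros n. split.
  - apply Hub. exists n. auto.
  - apply Hlub. intros y [k ->]. destruct (Nat.le_ge_cases k n) as [L|L].
    + pose proof (Hm k n L). pose proof (Huv n). lra.
    + pose proof (Hm n k L). pose proof (Huv k). lra.
Qed.

Lemma pow2_unbounded K : exists n, K < 2 ^ n.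
Proof.
  destruct (Pow_x_infinity 2 ltac:(rewrite Rabs_right; lra) (K + 1)) as [N HN].
  exists N. specialize (HN N (le_n N)). rewrite Rabs_right in HN; [lra|]. apply Rle_ge, pow_le; lra.
Qed.

Record rect := mk_rect { s_lo : R; s_hi : R; t_lo : R; t_hi : R }.

Definition in_rect (s t : R) (q : rect) : Prop := s_lo q <= s <= s_hi q /\ t_lo q <= t <= t_hi q.

Definition rect_size (q : rect) : R := (s_hi q - s_lo q) + (t_hi q - t_lo q).

Definition quarter (i j : bool) (q : rect) : rect :=
  let ms := (s_lo q + s_hi q) / 2 in let mt := (t_lo q + t_hi q) / 2 in
  mk_rect (if i then ms else s_lo q) (if i then s_hi q else ms)
          (if j then mt else t_lo q) (if j then t_hi q else mt).

Definition subrect (q' q : rect) : Prop :=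
  s_lo q <= s_lo q' /\ s_hi q' <= s_hi q /\ t_lo q <= t_lo q' /\ t_hi q' <= t_hi q.

Section HomotopyBoundary.

Variables (gam gam_s gam_t : R -> R -> C) (T L : R).

Definition in_dom (s t : R) : Prop := 0 <= s <= 1 /\ 0 <= t <= T.

Hypothesis T_nonneg : 0 <= T.
Hypothesis gam_ds : forall s t, in_dom s t -> has_pderiv (fun s' => gam s' t) s (gam_s s t).
Hypothesis gam_dt : forall s t, in_dom s t -> has_pderiv (fun t' => gam s t') t (gam_t s t).
Hypothesis gam_s_cont : forall s t, in_dom s t -> pcont_at (fun s' => gam_s s' t) s.
Hypothesis gam_t_cont : forall s t, in_dom s t -> pcont_at (fun t' => gam_t s t') t.
Hypothesis gam_lip : forall s t s' t', in_dom s t -> in_dom s' t' ->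
  Cmod (gam s t - gam s' t') <= L * (Rabs (s - s') + Rabs (t - t')).
Hypothesis gam_bound : forall s t, in_dom s t -> Cmod (gam_s s t) <= L /\ Cmod (gam_t s t) <= L.

Definition rect_in_dom (q : rect) : Prop :=
  0 <= s_lo q <= s_hi q /\ s_hi q <= 1 /\ 0 <= t_lo q <= t_hi q /\ t_hi q <= T.

Definition cont_on_image (Psi : C -> C) : Prop := forall s t, in_dom s t -> ccont_at Psi (gam s t).

Definition side_t (Psi : C -> C) (s : R) (t : R) : C := (Psi (gam s t) * gam_t s t)%C.
Definition side_s (Psi : C -> C) (t : R) (s : R) : C := (Psi (gam s t) * gam_s s t)%C.

(* The integral of [Psi] along the image under [gam] of the positively oriented boundary of [q]. *)
Definition bdry_int (Psi : C -> C) (q : rect) : C :=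
  (CInt (side_t Psi (s_hi q)) (t_lo q) (t_hi q) - CInt (side_t Psi (s_lo q)) (t_lo q) (t_hi q)
   - CInt (side_s Psi (t_hi q)) (s_lo q) (s_hi q) + CInt (side_s Psi (t_lo q)) (s_lo q) (s_hi q))%C.

Lemma L_nonneg : 0 <= L.
Proof.
  assert (D : in_dom 0 0) by (split; lra).
  destruct (gam_bound 0 0 D) as [Hb _]. pose proof (Cmod_ge_0 (gam_s 0 0)). lra.
Qed.

Section Integrand.

Variable Psi : C -> C.
Hypothesis Psi_cont : cont_on_image Psi.

Lemma ex_CInt_side_t s t1 t2 : 0 <= s <= 1 -> 0 <= t1 <= t2 -> t2 <= T -> ex_CInt (side_t Psi s) t1 t2.
Proof.
  intros Hs Ht1 Ht2. apply ex_CInt_pcont; [lra|]. intros t Ht.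
  assert (D : in_dom s t) by (split; lra).
  apply pcont_mult; [|apply gam_t_cont, D].
  apply pcont_comp; [apply Psi_cont, D|]. eapply has_pderiv_cont, gam_dt, D.
Qed.

Lemma ex_CInt_side_s t s1 s2 : 0 <= t <= T -> 0 <= s1 <= s2 -> s2 <= 1 -> ex_CInt (side_s Psi t) s1 s2.
Proof.
  intros Ht Hs1 Hs2. apply ex_CInt_pcont; [lra|]. intros s Hs.
  assert (D : in_dom s t) by (split; lra).
  apply pcont_mult; [|apply gam_s_cont, D].
  apply pcont_comp with (G := Psi) (p := fun s' => gam s' t); [apply Psi_cont, D|].
  eapply has_pderiv_cont, gam_ds, D.
Qed.

Lemma bdry_int_split_s q m : rect_in_dom q -> s_lo q <= m <= s_hi q ->
  bdry_int Psi q = (bdry_int Psi (mk_rect (s_lo q) m (t_lo q) (t_hi q))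
                    + bdry_int Psi (mk_rect m (s_hi q) (t_lo q) (t_hi q)))%C.
Proof.
  intros (?&?&?&?) Hm. unfold bdry_int; simpl.
  rewrite <- (CInt_Chasles (side_s Psi (t_hi q)) (s_lo q) m (s_hi q)) by (apply ex_CInt_side_s; lra).
  rewrite <- (CInt_Chasles (side_s Psi (t_lo q)) (s_lo q) m (s_hi q)) by (apply ex_CInt_side_s; lra).
  ring.
Qed.

Lemma bdry_int_split_t q m : rect_in_dom q -> t_lo q <= m <= t_hi q ->
  bdry_int Psi q = (bdry_int Psi (mk_rect (s_lo q) (s_hi q) (t_lo q) m)
                    + bdry_int Psi (mk_rect (s_lo q) (s_hi q) m (t_hi q)))%C.
Proof.
  intros (?&?&?&?) Hm. unfold bdry_int; simpl.
  rewrite <- (CInt_Chasles (side_t Psi (s_hi q)) (t_lo q) m (t_hi q)) by (apply ex_CInt_side_t; lra).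
  rewrite <- (CInt_Chasles (side_t Psi (s_lo q)) (t_lo q) m (t_hi q)) by (apply ex_CInt_side_t; lra).
  ring.
Qed.

Lemma bdry_int_quarters q : rect_in_dom q ->
  bdry_int Psi q = (bdry_int Psi (quarter false false q) + bdry_int Psi (quarter true false q)
                    + bdry_int Psi (quarter false true q) + bdry_int Psi (quarter true true q))%C.
Proof.
  intros Hq. pose proof Hq as (?&?&?&?). unfold quarter; simpl.
  set (ms := (s_lo q + s_hi q) / 2). set (mt := (t_lo q + t_hi q) / 2).
  rewrite (bdry_int_split_s q ms) by (auto; unfold ms; lra).
  rewrite (bdry_int_split_t (mk_rect (s_lo q) ms (t_lo q) (t_hi q)) mt)
    by (unfold rect_in_dom, ms, mt; simpl; lra).
  rewrite (bdry_int_split_t (mk_rect ms (s_hi q) (t_lo q) (t_hi q)) mt)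
    by (unfold rect_in_dom, ms, mt; simpl; lra).
  simpl. ring.
Qed.

Lemma bdry_int_norm_le q M : rect_in_dom q ->
  (forall s t, in_rect s t q -> Cmod (Psi (gam s t)) <= M) ->
  Cmod (bdry_int Psi q) <= 2 * rect_size q * (M * L).
Proof.
  intros Hq HM. pose proof Hq as (?&?&?&?).
  assert (Side : forall s t, in_rect s t q ->
            Cmod (side_t Psi s t) <= M * L /\ Cmod (side_s Psi t s) <= M * L).
  { intros s t Hst. pose proof (HM s t Hst) as HMst. unfold in_rect in Hst.
    destruct (gam_bound s t ltac:(split; lra)) as [B1 B2].
    unfold side_t, side_s. rewrite !Cmod_mult.
    pose proof (Cmod_ge_0 (Psi (gam s t))). pose proof (Cmod_ge_0 (gam_s s t)). pose proof (Cmod_ge_0 (gam_t s t)).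
    split; apply Rmult_le_compat; lra. }
  assert (IT : forall s, s_lo q <= s <= s_hi q ->
            Cmod (CInt (side_t Psi s) (t_lo q) (t_hi q)) <= (t_hi q - t_lo q) * (M * L)).
  { intros s Hs'. apply CInt_norm_le; [lra|apply ex_CInt_side_t; lra|].
    intros t Ht'. apply Side. split; lra. }
  assert (IS : forall t, t_lo q <= t <= t_hi q ->
            Cmod (CInt (side_s Psi t) (s_lo q) (s_hi q)) <= (s_hi q - s_lo q) * (M * L)).
  { intros t Ht'. apply CInt_norm_le; [lra|apply ex_CInt_side_s; lra|].
    intros s Hs'. apply Side. split; lra. }
  unfold bdry_int, rect_size.
  pose proof (IT (s_hi q) ltac:(lra)). pose proof (IT (s_lo q) ltac:(lra)).
  pose proof (IS (t_hi q) ltac:(lra)). pose proof (IS (t_lo q) ltac:(lra)).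
  eapply Rle_trans; [apply Cmod_triangle|].
  eapply Rle_trans; [apply Rplus_le_compat_r, Cmod_minus_le|].
  eapply Rle_trans; [apply Rplus_le_compat_r, Rplus_le_compat_r, Cmod_minus_le|]. lra.
Qed.

(* Goursat's bisection: keep a quarter carrying at least a fourth of the boundary integral. *)
Definition bisect (q : rect) : rect :=
  let b := Cmod (bdry_int Psi q) / 4 in
  if Rle_dec b (Cmod (bdry_int Psi (quarter false false q))) then quarter false false q
  else if Rle_dec b (Cmod (bdry_int Psi (quarter true false q))) then quarter true false q
  else if Rle_dec b (Cmod (bdry_int Psi (quarter false true q))) then quarter false true q
  else quarter true true q.

Lemma quarter_spec i j q : rect_in_dom q ->
  rect_in_dom (quarter i j q) /\ subrect (quarter i j q) q /\ rect_size (quarter i j q) = rect_size q / 2.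
Proof.
  intros (?&?&?&?). unfold rect_in_dom, subrect, rect_size, quarter.
  destruct i, j; simpl; lra.
Qed.

Lemma bisect_spec q : rect_in_dom q ->
  Cmod (bdry_int Psi q) <= 4 * Cmod (bdry_int Psi (bisect q)) /\
  rect_in_dom (bisect q) /\ subrect (bisect q) q /\ rect_size (bisect q) = rect_size q / 2.
Proof.
  intros Hq. unfold bisect; cbv zeta.
  destruct (Rle_dec _ _); [split; [lra|apply quarter_spec, Hq]|].
  destruct (Rle_dec _ _); [split; [lra|apply quarter_spec, Hq]|].
  destruct (Rle_dec _ _); [split; [lra|apply quarter_spec, Hq]|].
  split; [|apply quarter_spec, Hq].
  assert (Cmod (bdry_int Psi q) <= Cmod (bdry_int Psi (quarter false false q))
            + Cmod (bdry_int Psi (quarter true false q)) + Cmod (bdry_int Psi (quarter false true q))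
            + Cmod (bdry_int Psi (quarter true true q))).
  { rewrite (bdry_int_quarters q Hq). eapply Rle_trans; [apply Cmod_triangle|].
    apply Rplus_le_compat_r, Cmod_triangle3. }
  lra.
Qed.

Definition bisect_iter (q0 : rect) (n : nat) : rect := Nat.iter n bisect q0.

Lemma bisect_iter_spec q0 n : rect_in_dom q0 ->
  rect_in_dom (bisect_iter q0 n) /\ Cmod (bdry_int Psi q0) <= 4 ^ n * Cmod (bdry_int Psi (bisect_iter q0 n)) /\
  rect_size (bisect_iter q0 n) = rect_size q0 / 2 ^ n.
Proof.
  intros Hq0. induction n as [|n (IH1&IH2&IH3)].
  - simpl. split; [exact Hq0|]. split; [lra|field].
  - change (bisect_iter q0 (S n)) with (bisect (bisect_iter q0 n)).
    destruct (bisect_spec _ IH1) as (S1&S2&_&S4).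
    assert (0 < 2 ^ n) by (apply pow_lt; lra). assert (0 < 4 ^ n) by (apply pow_lt; lra).
    split; [exact S2|]. split.
    + eapply Rle_trans; [exact IH2|]. simpl. rewrite (Rmult_comm 4), Rmult_assoc.
      apply Rmult_le_compat_l; lra.
    + rewrite S4, IH3. simpl. field. lra.
Qed.

Lemma bisect_iter_common_point q0 : rect_in_dom q0 ->
  exists s t, forall n, in_rect s t (bisect_iter q0 n).
Proof.
  intros Hq0.
  assert (Mono : forall n m, (n <= m)%nat -> subrect (bisect_iter q0 m) (bisect_iter q0 n)).
  { intros n m Hnm. induction Hnm as [|m Hnm IH]; [unfold subrect; lra|].
    destruct (bisect_iter_spec q0 m Hq0) as (R1&_).
    destruct (bisect_spec _ R1) as (_&_&S3&_).
    change (bisect_iter q0 (S m)) with (bisect (bisect_iter q0 m)).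
    unfold subrect in *. lra. }
  assert (Ord : forall n, rect_in_dom (bisect_iter q0 n)) by (intros n; apply (bisect_iter_spec q0 n Hq0)).
  destruct (nested_intervals (fun n => s_lo (bisect_iter q0 n)) (fun n => s_hi (bisect_iter q0 n))) as [s Hs].
  { intros n m Hnm. destruct (Mono n m Hnm) as (?&?&?&?). auto. }
  { intros n. destruct (Ord n) as (?&?&?&?). lra. }
  destruct (nested_intervals (fun n => t_lo (bisect_iter q0 n)) (fun n => t_hi (bisect_iter q0 n))) as [t Ht].
  { intros n m Hnm. destruct (Mono n m Hnm) as (?&?&?&?). auto. }
  { intros n. destruct (Ord n) as (?&?&?&?). lra. }
  exists s, t. intros n. split; auto.
Qed.

End Integrand.

Lemma bdry_int_minus P1 P2 q : cont_on_image P1 -> cont_on_image P2 -> rect_in_dom q ->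
  bdry_int (fun w => P1 w - P2 w)%C q = (bdry_int P1 q - bdry_int P2 q)%C.
Proof.
  intros H1 H2 (?&?&?&?). unfold bdry_int.
  assert (ET : forall s, 0 <= s <= 1 -> CInt (side_t (fun w => P1 w - P2 w)%C s) (t_lo q) (t_hi q) =
            (CInt (side_t P1 s) (t_lo q) (t_hi q) - CInt (side_t P2 s) (t_lo q) (t_hi q))%C).
  { intros s Hs. rewrite <- CInt_minus by (apply ex_CInt_side_t; auto; lra).
    apply CInt_ext; [lra|]. intros; unfold side_t; ring. }
  assert (ES : forall t, 0 <= t <= T -> CInt (side_s (fun w => P1 w - P2 w)%C t) (s_lo q) (s_hi q) =
            (CInt (side_s P1 t) (s_lo q) (s_hi q) - CInt (side_s P2 t) (s_lo q) (s_hi q))%C).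
  { intros t Ht. rewrite <- CInt_minus by (apply ex_CInt_side_s; auto; lra).
    apply CInt_ext; [lra|]. intros; unfold side_s; ring. }
  rewrite !ET, !ES by lra. ring.
Qed.

Lemma cont_on_image_affine al be w0 : cont_on_image (fun w => al + be * (w - w0))%C.
Proof. intros s t _. eapply has_cderiv_cont, has_cderiv_affine. Qed.

(* An affine integrand has the primitive [al w + be (w - w0)^2 / 2]. *)
Lemma bdry_int_affine al be w0 q : rect_in_dom q -> bdry_int (fun w => al + be * (w - w0))%C q = RtoC 0.
Proof.
  intros (?&?&?&?).
  set (Phi := fun w => (al * w + (be / 2) * ((w - w0) * (w - w0)))%C).
  assert (DPhi : forall w, has_cderiv Phi w (al + be * (w - w0))%C).
  { intros w. unfold Phi. eapply has_cderiv_eq.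
    - apply has_cderiv_plus; [apply has_cderiv_scal, has_cderiv_id|]. apply has_cderiv_scal.
      apply has_cderiv_mult; apply has_cderiv_minus; (apply has_cderiv_id || apply has_cderiv_const).
    - cbv beta. field. }
  assert (ET : forall s, 0 <= s <= 1 -> CInt (side_t (fun w => al + be * (w - w0))%C s) (t_lo q) (t_hi q) =
            (Phi (gam s (t_hi q)) - Phi (gam s (t_lo q)))%C).
  { intros s Hs. unfold side_t. apply (CInt_FTC (fun t => Phi (gam s t))); [lra| |].
    - intros t Ht. apply (has_pderiv_comp Phi (fun t' => gam s t')); [apply DPhi|apply gam_dt; split; lra].
    - intros t Ht. apply pcont_mult; [|apply gam_t_cont; split; lra].
      apply (pcont_comp (fun w => al + be * (w - w0))%C (fun t' => gam s t'));
        [apply cont_on_image_affine; split; lra|]. eapply has_pderiv_cont, gam_dt; split; lra. }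
  assert (ES : forall t, 0 <= t <= T -> CInt (side_s (fun w => al + be * (w - w0))%C t) (s_lo q) (s_hi q) =
            (Phi (gam (s_hi q) t) - Phi (gam (s_lo q) t))%C).
  { intros t Ht. unfold side_s. apply (CInt_FTC (fun s => Phi (gam s t))); [lra| |].
    - intros s Hs. apply (has_pderiv_comp Phi (fun s' => gam s' t)); [apply DPhi|apply gam_ds; split; lra].
    - intros s Hs. apply pcont_mult; [|apply gam_s_cont; split; lra].
      apply (pcont_comp (fun w => al + be * (w - w0))%C (fun s' => gam s' t));
        [apply cont_on_image_affine; split; lra|].
      eapply has_pderiv_cont, gam_ds; split; lra. }
  unfold bdry_int. rewrite !ET, !ES by lra. ring.
Qed.

Lemma gam_close_in_rect q s0 t0 s t : rect_in_dom q -> in_rect s0 t0 q -> in_rect s t q ->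
  Cmod (gam s t - gam s0 t0) <= L * rect_size q.
Proof.
  intros (?&?&?&?) [? ?] [? ?]. eapply Rle_trans; [apply gam_lip; split; lra|].
  apply Rmult_le_compat_l; [apply L_nonneg|]. unfold rect_size.
  apply Rplus_le_compat; apply Rabs_le; lra.
Qed.

Section Holomorphic.

Variables G G' : C -> C.
Hypothesis G_holo : forall s t, in_dom s t -> has_cderiv G (gam s t) (G' (gam s t)).

Lemma G_cont : cont_on_image G.
Proof. intros s t D. eapply has_cderiv_cont, G_holo, D. Qed.

(* The tangent map at [w0] has boundary integral zero, so only the remainder counts. *)
Lemma bdry_int_near_point q w0 r eps : rect_in_dom q ->
  (forall s t, in_rect s t q -> Cmod (gam s t - w0) <= r) ->
  (forall w, Cmod (w - w0) <= r -> Cmod (G w - G w0 - G' w0 * (w - w0))%C <= eps * Cmod (w - w0)) ->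
  0 <= eps -> Cmod (bdry_int G q) <= 2 * rect_size q * (eps * r * L).
Proof.
  intros Gq Close Tangent Heps.
  set (Rem := fun w => (G w - (G w0 + G' w0 * (w - w0)))%C).
  replace (bdry_int G q) with (bdry_int Rem q).
  2:{ unfold Rem. rewrite bdry_int_minus by (auto using G_cont, cont_on_image_affine).
      rewrite bdry_int_affine by auto. ring. }
  apply bdry_int_norm_le; [|exact Gq|].
  - intros s t D. eapply has_cderiv_cont. unfold Rem.
    apply has_cderiv_minus; [apply G_holo, D|apply has_cderiv_affine].
  - intros s t Hin. pose proof (Close s t Hin). unfold Rem.
    replace (G (gam s t) - (G w0 + G' w0 * (gam s t - w0)))%C with (G (gam s t) - G w0 - G' w0 * (gam s t - w0))%C
      by ring.
    eapply Rle_trans; [apply Tangent; lra|]. apply Rmult_le_compat_l; lra.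
Qed.

(* On the n-th Goursat rectangle around the common point, [G] is affine up to [eps |w - w0|]
   while the rectangle has perimeter and image diameter of order [2^-n]. *)
Lemma bdry_int_small q0 eps : rect_in_dom q0 -> 0 < eps ->
  Cmod (bdry_int G q0) <= 2 * eps * L ^ 2 * rect_size q0 ^ 2.
Proof.
  intros Hq0 Heps. pose proof L_nonneg as HL.
  destruct (bisect_iter_common_point G G_cont q0 Hq0) as [ss [tt Hst]].
  assert (D0 : in_dom ss tt).
  { destruct (Hst 0%nat) as [? ?]. destruct Hq0 as (?&?&?&?). simpl in *. split; lra. }
  destruct (G_holo ss tt D0 eps Heps) as [del [Hdel Tangent]].
  set (S0 := rect_size q0).
  assert (HS0 : 0 <= S0) by (destruct Hq0 as (?&?&?&?); unfold S0, rect_size; lra).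
  destruct (pow2_unbounded (L * S0 / del)) as [n Hn].
  assert (P2 : 0 < 2 ^ n) by (apply pow_lt; lra).
  destruct (bisect_iter_spec G G_cont q0 n Hq0) as (Gq&Bq0&Sq).
  set (q := bisect_iter G q0 n) in *. fold S0 in Sq.
  set (r := L * S0 / 2 ^ n).
  assert (Hrdel : r < del).
  { unfold r. apply (Rmult_lt_reg_r (2 ^ n)); auto. replace (L * S0 / 2 ^ n * 2 ^ n) with (L * S0) by (field; lra).
    apply (Rmult_lt_compat_l del) in Hn; auto. replace (del * (L * S0 / del)) with (L * S0) in Hn by (field; lra).
    lra. }
  assert (Bq : Cmod (bdry_int G q) <= 2 * rect_size q * (eps * r * L)).
  { apply (bdry_int_near_point q (gam ss tt)); [exact Gq| |intros w Hw; apply Tangent; lra|lra].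
    intros s t Hin. replace r with (L * rect_size q) by (unfold r; rewrite Sq; field; lra).
    apply gam_close_in_rect; [exact Gq|apply (Hst n)|exact Hin]. }
  eapply Rle_trans; [exact Bq0|].
  assert (E4 : 4 ^ n = 2 ^ n * 2 ^ n) by (rewrite <- Rpow_mult_distr; f_equal; ring).
  rewrite Sq in Bq.
  replace (2 * eps * L ^ 2 * S0 ^ 2) with (4 ^ n * (2 * (S0 / 2 ^ n) * (eps * r * L)))
    by (rewrite E4; unfold r; field; lra).
  apply Rmult_le_compat_l; [apply pow_le; lra|exact Bq].
Qed.

Lemma bdry_int_holo_zero q0 : rect_in_dom q0 -> bdry_int G q0 = RtoC 0.
Proof.
  intros Hq0. apply Cmod_eq_0. set (X := Cmod (bdry_int G q0)).
  pose proof (Cmod_ge_0 (bdry_int G q0)) as HX. fold X in HX.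
  set (K := 2 * L ^ 2 * rect_size q0 ^ 2 + 1).
  assert (HK : 1 <= K) by (unfold K; pose proof (pow2_ge_0 L); pose proof (pow2_ge_0 (rect_size q0)); nra).
  destruct (Req_dec X 0) as [Z|Z]; auto. exfalso.
  pose proof (bdry_int_small q0 (X / (2 * K)) Hq0 ltac:(apply Rdiv_lt_0_compat; lra)) as Hsmall. fold X in Hsmall.
  assert (2 * (X / (2 * K)) * L ^ 2 * rect_size q0 ^ 2 < X) by (apply (Rmult_lt_reg_r (2 * K)); [lra|];
    unfold K in *; field_simplify; [nra|lra]).
  lra.
Qed.

End Holomorphic.

End HomotopyBoundary.

(* The curves [t |-> gam s t] are closed, so the [s]-sides of the boundary cancel. *)
Theorem homotopy_cauchy (gam gam_s gam_t : R -> R -> C) (T L : R) (G G' : C -> C) :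
  0 <= T ->
  (forall s t, in_dom T s t -> has_pderiv (fun s' => gam s' t) s (gam_s s t)) ->
  (forall s t, in_dom T s t -> has_pderiv (fun t' => gam s t') t (gam_t s t)) ->
  (forall s t, in_dom T s t -> pcont_at (fun s' => gam_s s' t) s) ->
  (forall s t, in_dom T s t -> pcont_at (fun t' => gam_t s t') t) ->
  (forall s t s' t', in_dom T s t -> in_dom T s' t' ->
     Cmod (gam s t - gam s' t') <= L * (Rabs (s - s') + Rabs (t - t'))) ->
  (forall s t, in_dom T s t -> Cmod (gam_s s t) <= L /\ Cmod (gam_t s t) <= L) ->
  (forall s t, in_dom T s t -> has_cderiv G (gam s t) (G' (gam s t))) ->
  (forall s, 0 <= s <= 1 -> gam s 0 = gam s T /\ gam_s s 0 = gam_s s T) ->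
  CInt (side_t gam gam_t G 0) 0 T = CInt (side_t gam gam_t G 1) 0 T.
Proof.
  intros HT Hds Hdt Hsc Htc Hlip Hb Hholo Hper.
  assert (Gq : rect_in_dom T (mk_rect 0 1 0 T)) by (unfold rect_in_dom; simpl; lra).
  pose proof (bdry_int_holo_zero gam gam_s gam_t T L HT Hds Hdt Hsc Htc Hlip Hb G G' Hholo _ Gq) as Z.
  assert (ES : CInt (side_s gam gam_s G T) 0 1 = CInt (side_s gam gam_s G 0) 0 1).
  { apply CInt_ext; [lra|]. intros s Hs. unfold side_s. destruct (Hper s Hs) as [-> ->]. reflexivity. }
  unfold bdry_int in Z; simpl in Z. rewrite ES in Z.
  set (A0 := CInt (side_t gam gam_t G 0) 0 T) in *. set (A1 := CInt (side_t gam gam_t G 1) 0 T) in *.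
  transitivity (A1 - (A1 - A0 - CInt (side_s gam gam_s G 0) 0 1 + CInt (side_s gam gam_s G 0) 0 1))%C; [ring|].
  rewrite Z. ring.
Qed.

(** * Cauchy's integral formula *)

Lemma expi_lipschitz a b : Cmod (expi a - expi b) <= Rabs (a - b).
Proof.
  assert (MV : forall a b, b <= a -> Cmod (expi a - expi b) <= 1 * (a - b)).
  { intros x y Hxy. apply (path_mean_value_ineq expi (fun t => Ci * expi t)%C y x 1); [lra| |].
    - intros; apply has_pderiv_expi.
    - intros t _. rewrite Cmod_mult, Cmod_Ci, Cmod_expi. lra. }
  destruct (Rle_dec b a) as [Hab|Hab].
  - rewrite Rabs_right by lra. specialize (MV a b Hab). lra.
  - rewrite Rabs_left, Cmod_minus_sym by lra. specialize (MV b a ltac:(lra)). lra.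
Qed.

Definition circle_int (rho : R) (Phi : C -> C) : C :=
  CInt (fun th => Phi (RtoC rho * expi th) * (Ci * (RtoC rho * expi th)))%C 0 (2 * PI).

Section Annulus.

Variables (z : C) (eps rho : R).
Hypothesis eps_pos : 0 < eps.
Hypothesis z_inside : Cmod z + eps < rho.

(* The linear homotopy from the circle of radius [eps] around [z] (at [s = 0]) to the circle
   of radius [rho] around [0] (at [s = 1]). *)
Definition radius_at (s : R) : R := (1 - s) * eps + s * rho.
Definition annulus (s t : R) : C := (RtoC (1 - s) * z + RtoC (radius_at s) * expi t)%C.
Definition annulus_ds (s t : R) : C := (RtoC (rho - eps) * expi t - z)%C.
Definition annulus_dt (s t : R) : C := (RtoC (radius_at s) * (Ci * expi t))%C.

Lemma radius_at_bounds s : 0 <= s <= 1 -> eps <= radius_at s <= rho.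
Proof. intros Hs. pose proof (Cmod_ge_0 z). unfold radius_at. nra. Qed.

Lemma annulus_has_pderiv_s s t : has_pderiv (fun s' => annulus s' t) s (annulus_ds s t).
Proof.
  apply has_pderiv_ext with (fun s' => (z + RtoC eps * expi t) + RtoC s' * annulus_ds s t)%C.
  - intros s'. unfold annulus, annulus_ds, radius_at. rewrite !RtoC_plus, !RtoC_mult, !RtoC_minus. ring.
  - eapply has_pderiv_eq; [apply has_pderiv_plus; [apply has_pderiv_const|apply has_pderiv_line]|]. ring.
Qed.

Lemma annulus_has_pderiv_t s t : has_pderiv (fun t' => annulus s t') t (annulus_dt s t).
Proof.
  eapply has_pderiv_eq; [apply has_pderiv_plus; [apply has_pderiv_const|apply has_pderiv_scal, has_pderiv_expi]|].
  unfold annulus_dt. ring.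
Qed.

Lemma annulus_ds_cont s t : pcont_at (fun s' => annulus_ds s' t) s.
Proof. exact (pcont_const (annulus_ds 0 t) s). Qed.

Lemma annulus_dt_cont s t : pcont_at (fun t' => annulus_dt s t') t.
Proof. eapply has_pderiv_cont, has_pderiv_scal, has_pderiv_scal, has_pderiv_expi. Qed.

Lemma annulus_lipschitz s t s' t' : 0 <= s <= 1 -> 0 <= s' <= 1 ->
  Cmod (annulus s t - annulus s' t') <= (2 * rho + Cmod z) * (Rabs (s - s') + Rabs (t - t')).
Proof.
  intros Hs Hs'. pose proof (radius_at_bounds s' Hs'). pose proof (Cmod_ge_0 z).
  replace (annulus s t - annulus s' t')%C with
    (RtoC (s' - s) * z + RtoC ((s - s') * (rho - eps)) * expi t + RtoC (radius_at s') * (expi t - expi t'))%C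
    by (unfold annulus, radius_at; rewrite !RtoC_plus, !RtoC_mult, !RtoC_minus; ring).
  eapply Rle_trans; [apply Cmod_triangle3|]. rewrite !Cmod_mult, !Cmod_R, Cmod_expi.
  pose proof (expi_lipschitz t t'). pose proof (Rabs_pos (s - s')). pose proof (Rabs_pos (t - t')).
  rewrite (Rabs_minus_sym s' s), Rabs_mult, (Rabs_right (rho - eps)), (Rabs_right (radius_at s')) by lra.
  assert (radius_at s' * Cmod (expi t - expi t') <= rho * Rabs (t - t'))
    by (apply Rmult_le_compat; try lra; apply Cmod_ge_0).
  nra.
Qed.

Lemma annulus_bound s t : 0 <= s <= 1 ->
  Cmod (annulus_ds s t) <= 2 * rho + Cmod z /\ Cmod (annulus_dt s t) <= 2 * rho + Cmod z.
Proof.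
  intros Hs. pose proof (radius_at_bounds s Hs). pose proof (Cmod_ge_0 z). unfold annulus_ds, annulus_dt. split.
  - eapply Rle_trans; [apply Cmod_minus_le|]. rewrite Cmod_circle; lra.
  - rewrite Cmod_mult, Cmod_mult, Cmod_R, Cmod_Ci, Cmod_expi, Rabs_right; lra.
Qed.

Lemma annulus_in_disk s t : 0 <= s <= 1 -> Cmod (annulus s t) <= rho.
Proof.
  intros Hs. pose proof (radius_at_bounds s Hs). pose proof (Cmod_ge_0 z).
  unfold annulus. eapply Rle_trans; [apply Cmod_triangle|].
  rewrite Cmod_circle, Cmod_mult, Cmod_R, Rabs_right by lra. unfold radius_at. nra.
Qed.

Lemma annulus_avoids_z s t : 0 <= s <= 1 -> (annulus s t - z)%C <> RtoC 0.
Proof.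
  intros Hs X. pose proof (radius_at_bounds s Hs). pose proof (Cmod_ge_0 z).
  assert (E : (annulus s t - z = RtoC (radius_at s) * expi t - RtoC s * z)%C)
    by (unfold annulus; rewrite RtoC_minus; ring).
  pose proof (Cmod_rev_triangle (RtoC (radius_at s) * expi t) (RtoC s * z)) as Hrev.
  rewrite <- E, X, Cmod_0, Cmod_circle, Cmod_mult, Cmod_R, Rabs_right in Hrev by lra.
  unfold radius_at in *. nra.
Qed.

End Annulus.

Section CauchyFormula.

Variables (F F' : C -> C) (R0 : R).
Hypothesis F_holo : forall w, Cmod w < R0 -> has_cderiv F w (F' w).

Lemma cauchy_integrand_holo (z w : C) : Cmod w < R0 -> w <> z ->
  has_cderiv (fun v => F v / (v - z))%C w (F' w / (w - z) - F w / ((w - z) * (w - z)))%C.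
Proof.
  intros Hw Hwz. assert (Hne : (w - z)%C <> RtoC 0)
    by (intro X; apply Hwz; replace w with (w - z + z)%C by ring; rewrite X; ring).
  eapply has_cderiv_eq.
  - apply has_cderiv_mult; [apply F_holo, Hw|].
    apply (has_cderiv_inv (fun v => v - z)%C); [exact Hne|].
    apply has_cderiv_minus; [apply has_cderiv_id|apply has_cderiv_const].
  - cbv beta. field. exact Hne.
Qed.

Lemma circle_int_shrink (rho eps : R) (z : C) : 0 < eps -> Cmod z + eps < rho -> rho < R0 ->
  circle_int rho (fun w => F w / (w - z))%C = CInt (fun th => Ci * F (z + RtoC eps * expi th))%C 0 (2 * PI).
Proof.
  intros Heps Hz HR. pose proof Rgt_2PI_0.
  pose proof (homotopy_cauchy (annulus z eps rho) (annulus_ds z eps rho) (annulus_dt eps rho)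
    (2 * PI) (2 * rho + Cmod z) (fun w => F w / (w - z))%C
    (fun w => F' w / (w - z) - F w / ((w - z) * (w - z)))%C) as Hc.
  unfold side_t in Hc. symmetry. etransitivity; [|etransitivity; [apply Hc|]].
  - apply CInt_ext; [lra|]. intros th _. unfold annulus, annulus_dt, radius_at.
    replace ((1 - 0) * eps + 0 * rho) with eps by ring. rewrite Rminus_0_r, Cmult_1_l.
    replace (z + RtoC eps * expi th - z)%C with (RtoC eps * expi th)%C by ring.
    field. split; [apply expi_neq_0|]. intro X. injection X. lra.
  - lra.
  - intros s t _. apply annulus_has_pderiv_s.
  - intros s t _. apply annulus_has_pderiv_t.
  - intros s t _. apply annulus_ds_cont.
  - intros s t _. apply annulus_dt_cont.
  - intros s t s' t' [Hs _] [Hs' _]. apply annulus_lipschitz; lra.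
  - intros s t [Hs _]. apply annulus_bound; lra.
  - intros s t [Hs _]. apply cauchy_integrand_holo.
    + pose proof (annulus_in_disk z eps rho Heps Hz s t Hs). lra.
    + intro X. apply (annulus_avoids_z z eps rho Heps Hz s t Hs). rewrite X. ring.
  - intros s _. unfold annulus, annulus_ds. rewrite expi_2PI. split; reflexivity.
  - apply CInt_ext; [lra|]. intros th _. unfold annulus, annulus_dt, radius_at.
    replace ((1 - 1) * eps + 1 * rho) with rho by ring. rewrite Rminus_eq_0, Cmult_0_l, Cplus_0_l.
    unfold Cdiv. ring.
Qed.

Theorem cauchy_integral_formula (rho : R) (z : C) : rho < R0 -> Cmod z < rho ->
  circle_int rho (fun w => F w / (w - z))%C = (RtoC (2 * PI) * Ci * F z)%C.
Proof.
  intros HR Hz. pose proof Rgt_2PI_0 as H2PI. pose proof (Cmod_ge_0 z).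
  apply Cmod_eq_of_le_all. intros eta Heta.
  destruct (has_cderiv_cont F z (F' z) (F_holo z ltac:(lra)) (eta / (2 * PI))
    ltac:(apply Rdiv_lt_0_compat; lra)) as [del [Hdel W]].
  set (eps := Rmin del (rho - Cmod z) / 2).
  pose proof (Rmin_pos del (rho - Cmod z) Hdel ltac:(lra)).
  pose proof (Rmin_l del (rho - Cmod z)). pose proof (Rmin_r del (rho - Cmod z)).
  rewrite (circle_int_shrink rho eps z) by (unfold eps; lra).
  assert (Hc : forall th, pcont_at (fun th => Ci * F (z + RtoC eps * expi th))%C th).
  { intros th. apply pcont_mult; [apply pcont_const|].
    apply (pcont_comp F (fun th => z + RtoC eps * expi th)%C).
    2:{ eapply has_pderiv_cont, has_pderiv_plus; [apply has_pderiv_const|apply has_pderiv_scal, has_pderiv_expi]. }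
    eapply has_cderiv_cont, F_holo.
    eapply Rle_lt_trans; [apply Cmod_triangle|]. rewrite Cmod_circle; unfold eps; lra. }
  assert (Hconst : ex_CInt (fun _ => Ci * F z)%C 0 (2 * PI))
    by (apply ex_CInt_pcont; [lra|intros; apply pcont_const]).
  assert (Hex : ex_CInt (fun th => Ci * F (z + RtoC eps * expi th))%C 0 (2 * PI))
    by (apply ex_CInt_pcont; [lra|auto]).
  replace (RtoC (2 * PI) * Ci * F z)%C with (CInt (fun _ => Ci * F z)%C 0 (2 * PI))
    by (rewrite CInt_const by lra; rewrite Rminus_0_r; ring).
  rewrite <- CInt_minus by auto.
  eapply Rle_trans; [apply CInt_norm_le with (M := eta / (2 * PI)); [lra|apply ex_CInt_minus; auto|]|].
  - intros th _.
    replace (Ci * F (z + RtoC eps * expi th) - Ci * F z)%C with (Ci * (F (z + RtoC eps * expi th) - F z))%C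
      by ring.
    rewrite Cmod_mult, Cmod_Ci, Rmult_1_l. left. apply W.
    replace (z + RtoC eps * expi th - z)%C with (RtoC eps * expi th)%C by ring.
    rewrite Cmod_circle; unfold eps; lra.
  - right. field. lra.
Qed.

End CauchyFormula.

(** * Cauchy integrals *)

Lemma has_cderiv_of_quadratic_remainder K z l r C0 : 0 < r -> 0 <= C0 ->
  (forall w, Cmod (w - z) < r -> Cmod (K w - K z - l * (w - z))%C <= C0 * Cmod (w - z) ^ 2) ->
  has_cderiv K z l.
Proof.
  intros Hr HC H eps Heps. exists (Rmin r (eps / (C0 + 1))). split.
  { apply Rmin_pos; auto. apply Rdiv_lt_0_compat; lra. }
  intros w Hw. assert (H1 : Cmod (w - z) < r) by (eapply Rlt_le_trans; [exact Hw|apply Rmin_l]).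
  assert (H2 : Cmod (w - z) < eps / (C0 + 1)) by (eapply Rlt_le_trans; [exact Hw|apply Rmin_r]).
  eapply Rle_trans; [apply H; auto|]. pose proof (Cmod_ge_0 (w - z)).
  assert (Cmod (w - z) * (C0 + 1) <= eps).
  { apply (Rmult_lt_compat_r (C0 + 1)) in H2; [|lra]. unfold Rdiv in H2. rewrite Rmult_assoc, Rinv_l in H2; lra. }
  simpl. nra.
Qed.

Lemma has_cderiv_param_CInt (k : R -> C -> C) (dk : R -> C) z r C0 a b : a <= b -> 0 < r -> 0 <= C0 ->
  (forall w, Cmod (w - z) < r -> ex_CInt (fun th => k th w) a b) -> ex_CInt dk a b ->
  (forall th w, a <= th <= b -> Cmod (w - z) < r ->
     Cmod (k th w - k th z - (w - z) * dk th)%C <= C0 * Cmod (w - z) ^ 2) ->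
  has_cderiv (fun w => CInt (fun th => k th w) a b) z (CInt dk a b).
Proof.
  intros Hab Hr HC Hk Hdk Hrem.
  apply has_cderiv_of_quadratic_remainder with r ((b - a) * C0); [lra|nra|].
  intros w Hw. assert (Hz : Cmod (z - z) < r) by (replace (z - z)%C with (RtoC 0) by ring; rewrite Cmod_0; lra).
  rewrite Cmult_comm, <- CInt_Cmult, <- !CInt_minus by (auto using ex_CInt_minus, ex_CInt_Cmult).
  rewrite Rmult_assoc. apply CInt_norm_le; [lra|auto using ex_CInt_minus, ex_CInt_Cmult|].
  intros th Hth. apply Hrem; auto.
Qed.

Lemma kernel_remainder1 (u a b : C) M d : 0 < d -> d <= Cmod a -> d / 2 <= Cmod b -> Cmod u <= M ->
  Cmod (u / b ^ 1 - u / a ^ 1 - (a - b) * (u / a ^ 2))%C <= M / (d ^ 2 * (d / 2)) * Cmod (a - b) ^ 2.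
Proof.
  intros Hd Ha Hb Hu.
  assert (a <> RtoC 0) by (intro X; rewrite X, Cmod_0 in Ha; lra).
  assert (b <> RtoC 0) by (intro X; rewrite X, Cmod_0 in Hb; lra).
  replace (u / b ^ 1 - u / a ^ 1 - (a - b) * (u / a ^ 2))%C with (u * (a - b) ^ 2 / (a ^ 2 * b))%C
    by (field; auto).
  rewrite Cmod_div by (apply Cmult_neq_0; auto; apply Cpow_neq_0; auto).
  rewrite !Cmod_mult, !Cmod_pow. pose proof (Cmod_ge_0 (a - b)). pose proof (Cmod_ge_0 u).
  assert (Hden : d ^ 2 * (d / 2) <= Cmod a ^ 2 * Cmod b).
  { apply Rmult_le_compat; try lra; [apply pow_le; lra|]. apply pow_incr. lra. }
  assert (Hd0 : 0 < d ^ 2 * (d / 2)) by (apply Rmult_lt_0_compat; [apply pow_lt|]; lra).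
  unfold Rdiv. apply Rle_trans with (M * Cmod (a - b) ^ 2 * / (d ^ 2 * (d / 2))).
  - apply Rmult_le_compat; try (apply Rlt_le, Rinv_0_lt_compat; nra).
    + apply Rmult_le_pos; auto. apply pow_le; lra.
    + apply Rmult_le_compat_r; [apply pow_le|]; lra.
    + apply Rinv_le_contravar; lra.
  - right. field. lra.
Qed.

Lemma kernel_remainder2 (u a b : C) M d K : 0 < d -> d <= Cmod a -> d / 2 <= Cmod b -> Cmod u <= M ->
  Cmod a <= K -> Cmod b <= K ->
  Cmod (u / b ^ 2 - u / a ^ 2 - 2 * (a - b) * (u / a ^ 3))%C
    <= M * (3 * K) / (d ^ 3 * (d / 2) ^ 2) * Cmod (a - b) ^ 2.
Proof.
  intros Hd Ha Hb Hu HaK HbK.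
  assert (a <> RtoC 0) by (intro X; rewrite X, Cmod_0 in Ha; lra).
  assert (b <> RtoC 0) by (intro X; rewrite X, Cmod_0 in Hb; lra).
  replace (u / b ^ 2 - u / a ^ 2 - 2 * (a - b) * (u / a ^ 3))%C
    with (u * (a - b) ^ 2 * (a + 2 * b) / (a ^ 3 * b ^ 2))%C by (field; auto).
  rewrite Cmod_div by (apply Cmult_neq_0; apply Cpow_neq_0; auto).
  rewrite !Cmod_mult, !Cmod_pow. pose proof (Cmod_ge_0 (a - b)). pose proof (Cmod_ge_0 u).
  assert (Hab : Cmod (a + 2 * b) <= 3 * K).
  { eapply Rle_trans; [apply Cmod_triangle|]. rewrite Cmod_mult, Cmod_R, Rabs_right by lra. lra. }
  pose proof (Cmod_ge_0 (a + 2 * b)).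
  assert (Hden : d ^ 3 * (d / 2) ^ 2 <= Cmod a ^ 3 * Cmod b ^ 2).
  { apply Rmult_le_compat; try (apply pow_le; lra); apply pow_incr; lra. }
  assert (Hd0 : 0 < d ^ 3 * (d / 2) ^ 2) by (apply Rmult_lt_0_compat; apply pow_lt; lra).
  unfold Rdiv. apply Rle_trans with (M * Cmod (a - b) ^ 2 * (3 * K) * / (d ^ 3 * (d / 2) ^ 2)).
  - apply Rmult_le_compat; try (apply Rlt_le, Rinv_0_lt_compat; nra).
    + apply Rmult_le_pos; [apply Rmult_le_pos|]; auto. apply pow_le; lra.
    + apply Rmult_le_compat; try nra; apply pow_le; lra.
    + apply Rinv_le_contravar; lra.
  - right. field. lra.
Qed.

Section CauchyTransform.

Variables (rho : R) (u : R -> C).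
Hypothesis rho_pos : 0 < rho.
Hypothesis u_cont : forall t, pcont_at u t.

Definition cauchy_transform (m : nat) (z : C) : C :=
  CInt (fun th => u th / (RtoC rho * expi th - z) ^ m)%C 0 (2 * PI).

Lemma ex_CInt_kernel (m : nat) (w : C) : Cmod w < rho ->
  ex_CInt (fun th => u th / (RtoC rho * expi th - w) ^ m)%C 0 (2 * PI).
Proof.
  intros Hw. pose proof Rgt_2PI_0. apply ex_CInt_pcont; [lra|]. intros th _.
  apply pcont_mult; [apply u_cont|].
  apply (pcont_comp (fun v => / (v - w) ^ m)%C (fun th => RtoC rho * expi th)%C).
  - eapply has_cderiv_cont, (has_cderiv_inv (fun v => (v - w) ^ m)%C).
    + apply Cpow_neq_0, circle_minus_neq_0, Hw.
    + apply has_cderiv_pow, has_cderiv_minus; [apply has_cderiv_id|apply has_cderiv_const].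
  - eapply has_pderiv_cont, has_pderiv_scal, has_pderiv_expi.
Qed.

Lemma u_bounded : exists M, 0 <= M /\ forall t, 0 <= t <= 2 * PI -> Cmod (u t) <= M.
Proof.
  pose proof Rgt_2PI_0.
  destruct (continuity_ab_maj (fun t => Cmod (u t)) 0 (2 * PI)) as [x [Hx _]]; [lra| |].
  - intros; apply pcont_at_continuity_pt_Cmod, u_cont.
  - exists (Cmod (u x)). split; [apply Cmod_ge_0|auto].
Qed.

Lemma circle_dist_near (z w : C) th : Cmod z < rho -> Cmod (w - z) < (rho - Cmod z) / 2 ->
  Cmod w < rho /\ (rho - Cmod z) / 2 <= Cmod (RtoC rho * expi th - w).
Proof.
  intros Hz Hw. pose proof (circle_dist_ge rho z th ltac:(lra)).
  pose proof (Cmod_triangle (w - z) z). replace (w - z + z)%C with w in H0 by ring.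
  pose proof (Cmod_rev_triangle (RtoC rho * expi th - z) (w - z)).
  replace (RtoC rho * expi th - z - (w - z))%C with (RtoC rho * expi th - w)%C in H1 by ring.
  split; lra.
Qed.

Lemma cauchy_transform_deriv1 z : Cmod z < rho -> has_cderiv (cauchy_transform 1) z (cauchy_transform 2 z).
Proof.
  intros Hz. destruct u_bounded as [M [HM0 HM]]. pose proof Rgt_2PI_0.
  set (d := rho - Cmod z). assert (Hd : 0 < d) by (unfold d; lra).
  apply (has_cderiv_param_CInt (fun th w => u th / (RtoC rho * expi th - w) ^ 1)%C
          (fun th => u th / (RtoC rho * expi th - z) ^ 2)%C z (d / 2) (M / (d ^ 2 * (d / 2)))); try lra.
  - apply Rmult_le_pos; [lra|]. apply Rlt_le, Rinv_0_lt_compat, Rmult_lt_0_compat; [apply pow_lt|]; lra.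
  - intros w Hw. apply ex_CInt_kernel. apply (circle_dist_near z w 0); auto.
  - apply ex_CInt_kernel, Hz.
  - intros th w Hth Hw. destruct (circle_dist_near z w th Hz Hw) as [_ Hb].
    replace (w - z)%C with ((RtoC rho * expi th - z) - (RtoC rho * expi th - w))%C by ring.
    apply kernel_remainder1; auto. apply circle_dist_ge; lra.
Qed.

Lemma cauchy_transform_deriv2 z : Cmod z < rho ->
  has_cderiv (cauchy_transform 2) z (2 * cauchy_transform 3 z)%C.
Proof.
  intros Hz. destruct u_bounded as [M [HM0 HM]]. pose proof Rgt_2PI_0.
  set (d := rho - Cmod z). assert (Hd : 0 < d) by (unfold d; lra).
  assert (Hfar : forall w th, Cmod w < rho -> Cmod (RtoC rho * expi th - w) <= 2 * rho).
  { intros w th Hw. eapply Rle_trans; [apply Cmod_minus_le|]. rewrite Cmod_circle; lra. }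
  unfold cauchy_transform. rewrite <- CInt_Cmult by (apply ex_CInt_kernel, Hz).
  apply (has_cderiv_param_CInt (fun th w => u th / (RtoC rho * expi th - w) ^ 2)%C
          (fun th => 2 * (u th / (RtoC rho * expi th - z) ^ 3))%C z (d / 2)
          (M * (3 * (2 * rho)) / (d ^ 3 * (d / 2) ^ 2))); try lra.
  - apply Rmult_le_pos; [nra|]. apply Rlt_le, Rinv_0_lt_compat, Rmult_lt_0_compat; apply pow_lt; lra.
  - intros w Hw. apply ex_CInt_kernel. apply (circle_dist_near z w 0); auto.
  - apply ex_CInt_Cmult, ex_CInt_kernel, Hz.
  - intros th w Hth Hw. destruct (circle_dist_near z w th Hz Hw) as [Hw' Hb].
    replace ((w - z) * (2 * (u th / (RtoC rho * expi th - z) ^ 3)))%C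
      with (2 * (w - z) * (u th / (RtoC rho * expi th - z) ^ 3))%C by ring.
    replace (w - z)%C with ((RtoC rho * expi th - z) - (RtoC rho * expi th - w))%C by ring.
    apply (kernel_remainder2 _ _ _ M d (2 * rho)); auto. apply circle_dist_ge; lra.
Qed.

End CauchyTransform.

(** * Maximum modulus principle *)

Lemma circle_int_norm_le (rho : R) (Phi : C -> C) M : 0 <= rho ->
  (forall th, ccont_at Phi (RtoC rho * expi th)%C) ->
  (forall th, 0 <= th <= 2 * PI -> Cmod (Phi (RtoC rho * expi th)%C) <= M) ->
  Cmod (circle_int rho Phi) <= 2 * PI * (M * rho).
Proof.
  intros Hrho Hc HM. pose proof Rgt_2PI_0. unfold circle_int.
  replace (2 * PI) with (2 * PI - 0) at 2 by ring.
  apply CInt_norm_le; [lra| |].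
  - apply ex_CInt_pcont; [lra|]. intros th _. apply pcont_mult; [apply pcont_circle, Hc|].
    eapply has_pderiv_cont, has_pderiv_scal, has_pderiv_scal, has_pderiv_expi.
  - intros th Hth. rewrite Cmod_mult, Cmod_mult, Cmod_Ci, Rmult_1_l, Cmod_circle by lra.
    apply Rmult_le_compat_r; auto.
Qed.

Lemma le_of_pow_le_const_mul (x B K : R) : 0 <= x -> 0 <= B -> 0 < K ->
  (forall n, x ^ n <= K * B ^ n) -> x <= B.
Proof.
  intros Hx HB HK H. destruct (Rle_dec x B) as [Lxb|Lxb]; auto. exfalso.
  destruct (Req_dec B 0) as [Z|Z].
  - subst. specialize (H 1%nat). simpl in H. lra.
  - assert (HB' : 0 < B) by lra. assert (Hq : 1 < x / B) by (apply Rlt_div_r; lra).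
    destruct (Pow_x_infinity (x / B) ltac:(rewrite Rabs_right; lra) (K + 1)) as [N HN].
    specialize (HN N (le_n N)). specialize (H N).
    rewrite Rabs_right in HN by (apply Rle_ge, pow_le; lra).
    unfold Rdiv in HN. rewrite Rpow_mult_distr, pow_inv in HN.
    assert (0 < B ^ N) by (apply pow_lt; auto).
    apply (Rmult_ge_compat_r (B ^ N)) in HN; [|lra]. rewrite Rmult_assoc, Rinv_l in HN by lra. nra.
Qed.

Lemma le_of_forall_lt_one (X c a : R) : 0 <= a < 1 -> 0 <= c ->
  (forall x, a < x < 1 -> X <= c / x ^ 2) -> X <= c.
Proof.
  intros Ha Hc H. destruct (Rle_dec X c) as [L|L]; auto. exfalso.
  assert (HX : 0 < X) by lra. set (y := c / X).
  assert (Hy : 0 <= y < 1) by (unfold y; split; [apply Rdiv_le_0_compat; lra|apply Rlt_div_l; lra]).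
  set (x := (1 + Rmax a y) / 2).
  pose proof (Rmax_l a y). pose proof (Rmax_r a y). pose proof (Rmax_lub_lt a y 1 ltac:(lra) ltac:(lra)).
  assert (Hx : a < x < 1) by (unfold x; lra).
  specialize (H x Hx).
  assert (Hxy : y < x ^ 2) by (unfold x; nra).
  assert (Hx2 : 0 < x ^ 2) by nra.
  assert (X * x ^ 2 <= c).
  { replace c with (c / x ^ 2 * x ^ 2) by (field; lra). apply Rmult_le_compat_r; lra. }
  assert (c = y * X) by (unfold y; field; lra).
  nra.
Qed.

(* Cauchy's estimate for [F ^ n] gives [|F z| ^ n <= rho / (rho - |z|) * B ^ n] for every [n]. *)
Theorem maximum_modulus_disk (F F' : C -> C) (R0 rho B : R) (z : C) :
  (forall w, Cmod w < R0 -> has_cderiv F w (F' w)) -> 0 < rho < R0 ->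
  (forall th, Cmod (F (RtoC rho * expi th)%C) <= B) -> Cmod z < rho -> Cmod (F z) <= B.
Proof.
  intros HF Hrho HB Hz. pose proof Rgt_2PI_0. pose proof (Cmod_ge_0 z).
  assert (HB0 : 0 <= B) by (eapply Rle_trans; [apply Cmod_ge_0|apply (HB 0)]).
  apply (le_of_pow_le_const_mul _ _ (rho / (rho - Cmod z))); [apply Cmod_ge_0|lra|apply Rdiv_lt_0_compat; lra|].
  intros n.
  assert (HFn : forall w, Cmod w < R0 -> has_cderiv (fun v => F v ^ n)%C w (INR n * F w ^ pred n * F' w)%C)
    by (intros w Hw; apply has_cderiv_pow, HF, Hw).
  assert (Hn : Cmod (circle_int rho (fun w => F w ^ n / (w - z)))%C <= 2 * PI * (B ^ n / (rho - Cmod z) * rho)).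
  { apply circle_int_norm_le; [lra| |].
    - intros th. eapply has_cderiv_cont. unfold Cdiv. apply has_cderiv_mult.
      + apply HFn. rewrite Cmod_circle; lra.
      + apply (has_cderiv_inv (fun w => w - z)%C); [apply circle_minus_neq_0; lra|].
        apply has_cderiv_minus; [apply has_cderiv_id|apply has_cderiv_const].
    - intros th _. rewrite Cmod_div, Cmod_pow by (apply circle_minus_neq_0; lra).
      pose proof (circle_dist_ge rho z th ltac:(lra)). pose proof (Cmod_ge_0 (F (RtoC rho * expi th)%C)).
      unfold Rdiv. apply Rmult_le_compat; [apply pow_le; lra|apply Rlt_le, Rinv_0_lt_compat; lra| |].
      + apply pow_incr. split; auto.
      + apply Rinv_le_contravar; lra. }
  rewrite (cauchy_integral_formula _ _ R0 HFn rho z) in Hn by lra.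
  rewrite !Cmod_mult, Cmod_R, Cmod_Ci, Rabs_right, Cmod_pow in Hn by lra.
  rewrite Rmult_1_r in Hn. apply (Rmult_le_reg_l (2 * PI)); [lra|].
  eapply Rle_trans; [exact Hn|]. right. field. lra.
Qed.

(** * The class U(lambda) *)

Section ClassU.

Variables (f f' : C -> C) (a2 : C).
Hypothesis f_holo : forall w, Cmod w < 1 -> has_cderiv f w (f' w).
Hypothesis f_0 : f (RtoC 0) = RtoC 0.
Hypothesis f'_0 : f' (RtoC 0) = RtoC 1.
Hypothesis f'_deriv_0 : has_cderiv f' (RtoC 0) (2 * a2)%C.
Hypothesis f_nonzero : forall w, Cmod w < 1 -> w <> RtoC 0 -> f w <> RtoC 0.

(* The mean value inequality for [t |-> f (t w) - t w - a2 (t w)^2] on [0, 1]. *)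
Lemma f_second_order eta : 0 < eta -> exists del, 0 < del /\ forall w, Cmod w < del ->
  Cmod (f w - w - a2 * (w * w))%C <= eta * (Cmod w * Cmod w).
Proof.
  intros Heta. destruct (f'_deriv_0 eta Heta) as [d [Hd W]].
  exists (Rmin d 1). split; [apply Rmin_pos; lra|]. intros w Hw.
  pose proof (Rmin_l d 1). pose proof (Rmin_r d 1). pose proof (Cmod_ge_0 w).
  assert (Htw : forall t, 0 <= t <= 1 -> Cmod (RtoC t * w) <= Cmod w).
  { intros t Ht. rewrite Cmod_mult, Cmod_R, Rabs_right by lra. nra. }
  pose proof (path_mean_value_ineq (fun t => f (RtoC t * w) - RtoC t * w - a2 * ((RtoC t * w) * (RtoC t * w)))%C
    (fun t => (f' (RtoC t * w) - 1 - 2 * a2 * (RtoC t * w)) * w)%C 0 1 (eta * (Cmod w * Cmod w))) as M.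
  cbv beta in M. rewrite !Cmult_1_l, !Cmult_0_l, f_0, Rminus_0_r, Rmult_1_r in M.
  replace (f w - w - a2 * (w * w))%C with (f w - w - a2 * (w * w) - (0 - 0 - a2 * 0))%C by ring.
  apply M; [lra| |].
  - intros t Ht. eapply has_pderiv_eq.
    + apply has_pderiv_minus; [apply has_pderiv_minus|].
      * apply (has_pderiv_comp f (fun s => RtoC s * w)%C); [apply f_holo; specialize (Htw t Ht); lra|].
        apply has_pderiv_line.
      * apply has_pderiv_line.
      * apply (has_pderiv_comp (fun v => a2 * (v * v))%C (fun s => RtoC s * w)%C); [|apply has_pderiv_line].
        apply has_cderiv_scal, has_cderiv_mult; apply has_cderiv_id.
    + cbv beta. ring.
  - intros t Ht. rewrite Cmod_mult. specialize (Htw t Ht).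
    assert (Hv : Cmod (RtoC t * w - RtoC 0) < d) by (rewrite Cminus_0_r; lra).
    specialize (W _ Hv). rewrite f'_0, Cminus_0_r in W.
    rewrite <- Rmult_assoc. apply Rmult_le_compat_r; [lra|].
    eapply Rle_trans; [exact W|]. apply Rmult_le_compat_l; lra.
Qed.

(* The removable singularity of [f w / w] at [0] is filled in with its limit [f'(0) = 1]. *)
Definition f_over_z (w : C) : C := if Ceq_dec w (RtoC 0) then RtoC 1 else (f w / w)%C.
Definition f_over_z' (w : C) : C :=
  if Ceq_dec w (RtoC 0) then a2 else ((f' w * w - f w) / (w * w))%C.

Lemma f_over_z_nz w : w <> RtoC 0 -> f_over_z w = (f w / w)%C.
Proof. intros H. unfold f_over_z. destruct (Ceq_dec w 0); [contradiction|auto]. Qed.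

Lemma f_over_z_0 : f_over_z (RtoC 0) = RtoC 1.
Proof. unfold f_over_z. destruct (Ceq_dec 0 0); [auto|contradiction]. Qed.

Lemma f_over_z_holo_0 : has_cderiv f_over_z (RtoC 0) a2.
Proof.
  intros eps Heps. destruct (f_second_order eps Heps) as [del [Hdel W]].
  exists del. split; auto. intros w Hw. rewrite Cminus_0_r in Hw |- *. rewrite f_over_z_0.
  destruct (Ceq_dec w 0) as [Z|Z].
  - subst. rewrite f_over_z_0. replace (1 - 1 - a2 * 0)%C with (RtoC 0) by ring.
    rewrite !Cmod_0. lra.
  - rewrite f_over_z_nz by auto. pose proof (proj1 (Cmod_gt_0 w) Z).
    replace (f w / w - 1 - a2 * w)%C with ((f w - w - a2 * (w * w)) / w)%C by (field; auto).
    rewrite Cmod_div by auto. apply Rle_div_l; [lra|]. specialize (W w Hw). nra.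
Qed.

Lemma f_over_z_holo w : Cmod w < 1 -> has_cderiv f_over_z w (f_over_z' w).
Proof.
  intros Hw. unfold f_over_z'. destruct (Ceq_dec w 0) as [Z|Z]; [subst; apply f_over_z_holo_0|].
  pose proof (proj1 (Cmod_gt_0 w) Z).
  apply has_cderiv_loc with (F := fun v => (f v * / v)%C) (r := Cmod w); auto.
  - intros v Hv. rewrite f_over_z_nz; [reflexivity|]. intro X. subst.
    rewrite Cmod_minus_sym, Cminus_0_r in Hv. lra.
  - eapply has_cderiv_eq; [apply has_cderiv_mult; [apply f_holo, Hw|apply has_cderiv_Cinv, Z]|].
    field. exact Z.
Qed.

Lemma f_over_z_neq_0 w : Cmod w < 1 -> f_over_z w <> RtoC 0.
Proof.
  intros Hw. destruct (Ceq_dec w 0) as [Z|Z].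
  - subst. rewrite f_over_z_0. apply C1_nz.
  - rewrite f_over_z_nz by auto. intro X. apply (f_nonzero w Hw Z).
    replace (f w) with (f w / w * w)%C by (field; auto). rewrite X. ring.
Qed.

Definition z_over_f (w : C) : C := (/ f_over_z w)%C.
Definition z_over_f' (w : C) : C := (- f_over_z' w / (f_over_z w * f_over_z w))%C.

Lemma z_over_f_holo w : Cmod w < 1 -> has_cderiv z_over_f w (z_over_f' w).
Proof. intros Hw. apply has_cderiv_inv; [apply f_over_z_neq_0, Hw|apply f_over_z_holo, Hw]. Qed.

Lemma z_over_f_nz w : Cmod w < 1 -> w <> RtoC 0 -> z_over_f w = (w / f w)%C.
Proof.
  intros Hw Z. unfold z_over_f. rewrite f_over_z_nz by auto. pose proof (f_nonzero w Hw Z). field. auto.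
Qed.

Lemma z_over_f_0 : z_over_f (RtoC 0) = RtoC 1.
Proof. unfold z_over_f. rewrite f_over_z_0. field. Qed.

Lemma z_over_f'_0 : z_over_f' (RtoC 0) = (- a2)%C.
Proof.
  unfold z_over_f', f_over_z'. rewrite f_over_z_0. destruct (Ceq_dec 0 0); [|contradiction].
  field.
Qed.

Definition two_pi_i : C := (RtoC (2 * PI) * Ci)%C.

Lemma two_pi_i_neq_0 : two_pi_i <> RtoC 0.
Proof.
  unfold two_pi_i. intro X. pose proof Rgt_2PI_0.
  assert (E : Cmod (RtoC (2 * PI) * Ci) = 0) by (rewrite X; apply Cmod_0).
  rewrite Cmod_mult, Cmod_R, Cmod_Ci, Rabs_right in E; lra.
Qed.

Section Radius.

Variable rho : R.
Hypothesis rho_bounds : 0 < rho < 1.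

Definition zf_integrand (th : R) : C := ((z_over_f (RtoC rho * expi th) - 1) * (Ci * (RtoC rho * expi th)))%C.

(* The integrand of [h w dw] along the circle, where [h w = (z_over_f w - 1) / w = 1 / f w - 1 / w];
   the factor [w] of [dw = i w dth] cancels. *)
Definition h_integrand (th : R) : C := (Ci * (z_over_f (RtoC rho * expi th) - 1))%C.

Lemma zf_integrand_cont t : pcont_at zf_integrand t.
Proof.
  apply pcont_mult.
  - apply (pcont_circle (fun w => z_over_f w - 1)%C). eapply has_cderiv_cont, has_cderiv_minus;
      [apply z_over_f_holo; rewrite Cmod_circle; lra|apply has_cderiv_const].
  - eapply has_pderiv_cont, has_pderiv_scal, has_pderiv_scal, has_pderiv_expi.
Qed.

Lemma h_integrand_cont t : pcont_at h_integrand t.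
Proof.
  apply pcont_mult; [apply pcont_const|]. apply (pcont_circle (fun w => z_over_f w - 1)%C).
  eapply has_cderiv_cont, has_cderiv_minus; [apply z_over_f_holo; rewrite Cmod_circle; lra|apply has_cderiv_const].
Qed.

Lemma zf_integrand_cauchy z : Cmod z < rho -> cauchy_transform rho zf_integrand 1 z = (two_pi_i * (z_over_f z - 1))%C.
Proof.
  intros Hz. unfold two_pi_i.
  rewrite <- (cauchy_integral_formula (fun w => z_over_f w - 1)%C z_over_f' 1) with (rho := rho); [| |lra|auto].
  - unfold cauchy_transform, circle_int. apply CInt_ext; [pose proof Rgt_2PI_0; lra|]. intros th _.
    unfold zf_integrand. pose proof (circle_minus_neq_0 rho z th Hz). field. auto.
  - intros w Hw. eapply has_cderiv_eq; [apply has_cderiv_minus; [apply z_over_f_holo, Hw|apply has_cderiv_const]|].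
    ring.
Qed.

(* The Cauchy integral of [h]: it agrees with [h] off [0] and is holomorphic across [0]. *)
Definition h_cauchy (z : C) : C := (/ two_pi_i * cauchy_transform rho h_integrand 1 z)%C.
Definition h_cauchy' (z : C) : C := (/ two_pi_i * cauchy_transform rho h_integrand 2 z)%C.
Definition h_cauchy'' (z : C) : C := (/ two_pi_i * (2 * cauchy_transform rho h_integrand 3 z))%C.

Lemma h_cauchy_holo z : Cmod z < rho -> has_cderiv h_cauchy z (h_cauchy' z).
Proof.
  intros Hz. apply has_cderiv_scal, cauchy_transform_deriv1; [lra|apply h_integrand_cont|exact Hz].
Qed.

Lemma h_cauchy'_holo z : Cmod z < rho -> has_cderiv h_cauchy' z (h_cauchy'' z).
Proof.
  intros Hz. apply has_cderiv_scal, cauchy_transform_deriv2; [lra|apply h_integrand_cont|exact Hz].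
Qed.

Lemma h_cauchy_eq z : Cmod z < rho -> z <> RtoC 0 -> h_cauchy z = ((z_over_f z - 1) / z)%C.
Proof.
  intros Hz Z. pose proof Rgt_2PI_0. pose proof two_pi_i_neq_0.
  assert (Hr0 : Cmod (RtoC 0) < rho) by (rewrite Cmod_0; lra).
  assert (E : cauchy_transform rho h_integrand 1 z =
              (/ z * (cauchy_transform rho zf_integrand 1 z - cauchy_transform rho zf_integrand 1 (RtoC 0)))%C).
  { unfold cauchy_transform.
    rewrite <- CInt_minus, <- CInt_Cmult by (auto using ex_CInt_minus, ex_CInt_kernel, zf_integrand_cont).
    apply CInt_ext; [lra|]. intros th _. unfold zf_integrand, h_integrand.
    pose proof (circle_minus_neq_0 rho z th Hz). pose proof (circle_neq_0 rho th ltac:(lra)).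
    rewrite Cminus_0_r. field. repeat split; auto using expi_neq_0. intro X. injection X. lra. }
  unfold h_cauchy. rewrite E, !zf_integrand_cauchy, z_over_f_0 by auto. field. auto.
Qed.

(* At [0] the transform of [h_integrand] is that of [zf_integrand] with a doubled pole,
   i.e. the derivative of [2 pi i (z_over_f - 1)] at [0]. *)
Lemma h_cauchy_0 : h_cauchy (RtoC 0) = (- a2)%C.
Proof.
  pose proof Rgt_2PI_0. pose proof two_pi_i_neq_0.
  assert (Hr0 : Cmod (RtoC 0) < rho) by (rewrite Cmod_0; lra).
  assert (E : cauchy_transform rho h_integrand 1 (RtoC 0) = cauchy_transform rho zf_integrand 2 (RtoC 0)).
  { unfold cauchy_transform. apply CInt_ext; [lra|]. intros th _. unfold zf_integrand, h_integrand.
    rewrite Cminus_0_r. field. split; [apply expi_neq_0|]. intro X. injection X. lra. }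
  assert (D : cauchy_transform rho zf_integrand 2 (RtoC 0) = (two_pi_i * z_over_f' (RtoC 0))%C).
  { apply (has_cderiv_unique (cauchy_transform rho zf_integrand 1) (RtoC 0)).
    - apply cauchy_transform_deriv1; [lra|apply zf_integrand_cont|exact Hr0].
    - apply has_cderiv_loc with (F := fun w => (two_pi_i * (z_over_f w - 1))%C) (r := rho); [lra| |].
      + intros w Hw. rewrite Cminus_0_r in Hw. symmetry. apply zf_integrand_cauchy, Hw.
      + apply has_cderiv_scal. eapply has_cderiv_eq.
        * apply has_cderiv_minus; [apply z_over_f_holo; lra|apply has_cderiv_const].
        * ring. }
  unfold h_cauchy. rewrite E, D, z_over_f'_0. field. auto.
Qed.

Lemma h_cauchy'_eq z : Cmod z < rho -> z <> RtoC 0 -> h_cauchy' z = (- U_f f f' z / (z * z))%C.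
Proof.
  intros Hz Z. pose proof (proj1 (Cmod_gt_0 z) Z) as Hz0.
  assert (Hfz : f z <> RtoC 0) by (apply f_nonzero; auto; lra).
  apply (has_cderiv_unique h_cauchy z); [apply h_cauchy_holo, Hz|].
  apply has_cderiv_loc with (F := fun v => ((v * / f v - 1) * / v)%C) (r := Rmin (Cmod z) (rho - Cmod z)).
  - apply Rmin_pos; lra.
  - intros v Hv. pose proof (Rmin_l (Cmod z) (rho - Cmod z)). pose proof (Rmin_r (Cmod z) (rho - Cmod z)).
    assert (Hv0 : v <> RtoC 0) by (intro X; subst; rewrite Cmod_minus_sym, Cminus_0_r in Hv; lra).
    assert (Hvr : Cmod v < rho).
    { replace v with (v - z + z)%C by ring. eapply Rle_lt_trans; [apply Cmod_triangle|]. lra. }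
    rewrite h_cauchy_eq, z_over_f_nz by (auto; lra). reflexivity.
  - eapply has_cderiv_eq.
    + apply has_cderiv_mult; [|apply has_cderiv_Cinv, Z].
      apply has_cderiv_minus; [|apply has_cderiv_const].
      apply has_cderiv_mult; [apply has_cderiv_id|apply has_cderiv_inv; [exact Hfz|apply f_holo; lra]].
    + cbv beta. unfold U_f, Cdiv. simpl. field. auto.
Qed.

End Radius.

Section Bound.

Variable lambda : R.
Hypothesis U_bound : forall w, Cmod w < 1 -> w <> RtoC 0 -> Cmod (U_f f f' w) < lambda.

Lemma h_cauchy'_bound rho rho1 z : 0 < rho1 < rho -> rho < 1 -> Cmod z < rho1 ->
  Cmod (h_cauchy' rho z) <= lambda / rho1 ^ 2.
Proof.
  intros Hr1 Hr Hz.
  apply (maximum_modulus_disk (h_cauchy' rho) (h_cauchy'' rho) rho rho1); [|lra| |exact Hz].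
  - intros w Hw. apply h_cauchy'_holo; [lra|exact Hw].
  - intros th. assert (Hw : Cmod (RtoC rho1 * expi th) = rho1) by (apply Cmod_circle; lra).
    rewrite h_cauchy'_eq; [|lra|rewrite Hw; lra|apply circle_neq_0; lra].
    rewrite Cmod_div, Cmod_opp, Cmod_mult, Hw by (apply Cmult_neq_0; apply circle_neq_0; lra).
    replace (rho1 * rho1) with (rho1 ^ 2) by ring.
    apply Rmult_le_compat_r; [apply Rlt_le, Rinv_0_lt_compat, pow_lt; lra|].
    left. apply U_bound; [lra|apply circle_neq_0; lra].
Qed.

(* The mean value inequality for [h_cauchy] along the segment [[0, z0]]. *)
Lemma h_increment_bound z0 rho1 : 0 < Cmod z0 < rho1 -> rho1 < 1 ->
  Cmod ((z_over_f z0 - 1) / z0 + a2)%C <= lambda / rho1 ^ 2 * Cmod z0.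
Proof.
  intros Hz0 Hr1. set (rho := (1 + rho1) / 2).
  assert (Hrho : 0 < rho < 1) by (unfold rho; lra).
  assert (Z : z0 <> RtoC 0) by (intro X; rewrite X, Cmod_0 in Hz0; lra).
  assert (Htz : forall t, 0 <= t <= 1 -> Cmod (RtoC t * z0) <= Cmod z0).
  { intros t Ht. rewrite Cmod_mult, Cmod_R, Rabs_right by lra. nra. }
  pose proof (path_mean_value_ineq (fun t => h_cauchy rho (RtoC t * z0)) (fun t => h_cauchy' rho (RtoC t * z0) * z0)%C
    0 1 (lambda / rho1 ^ 2 * Cmod z0)) as Mv.
  cbv beta in Mv. rewrite Cmult_1_l, Cmult_0_l, h_cauchy_0, h_cauchy_eq, Rminus_0_r, Rmult_1_r in Mv
    by (auto; unfold rho; lra).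
  replace ((z_over_f z0 - 1) / z0 + a2)%C with ((z_over_f z0 - 1) / z0 - - a2)%C by ring.
  apply Mv; [lra| |].
  - intros t Ht. apply (has_pderiv_comp (h_cauchy rho) (fun s => RtoC s * z0)%C); [|apply has_pderiv_line].
    apply h_cauchy_holo; auto. specialize (Htz t Ht). unfold rho. lra.
  - intros t Ht. rewrite Cmod_mult. apply Rmult_le_compat_r; [apply Cmod_ge_0|].
    apply (h_cauchy'_bound rho rho1); try (unfold rho; lra). specialize (Htz t Ht). lra.
Qed.

Lemma key_estimate z0 : 0 < lambda -> Cmod z0 < 1 -> z0 <> RtoC 0 ->
  Cmod ((z_over_f z0 - 1) / z0 + a2)%C <= lambda * Cmod z0.
Proof.
  intros Hl Hz Z. pose proof (proj1 (Cmod_gt_0 z0) Z).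
  apply (le_of_forall_lt_one _ _ (Cmod z0)); [lra|nra|].
  intros x Hx. replace (lambda * Cmod z0 / x ^ 2) with (lambda / x ^ 2 * Cmod z0) by (field; lra).
  apply h_increment_bound; lra.
Qed.

End Bound.

End ClassU.

Lemma no_minus_inv_value (f f' : C -> C) (a2 mu : C) (lambda : R) :
  (forall w, Cmod w < 1 -> has_cderiv f w (f' w)) -> f (RtoC 0) = RtoC 0 -> f' (RtoC 0) = RtoC 1 ->
  has_cderiv f' (RtoC 0) (2 * a2)%C -> (forall w, Cmod w < 1 -> w <> RtoC 0 -> f w <> RtoC 0) ->
  (forall w, Cmod w < 1 -> w <> RtoC 0 -> Cmod (U_f f f' w) < lambda) ->
  0 < lambda <= 1 -> Cmod mu <= 1 - lambda -> (a2 + mu)%C <> RtoC 0 ->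
  ~ (exists z, Cmod z < 1 /\ f z = (- / (a2 + mu))%C).
Proof.
  intros Hd Hf0 Hf'0 Hd2 Hnz HU Hl Hmu Hs [z0 [Hz0 Ef]].
  assert (Z : z0 <> RtoC 0).
  { intro X. subst. apply C1_nz.
    replace (RtoC 1) with (- (- / (a2 + mu)) * (a2 + mu))%C by (field; auto).
    rewrite <- Ef, Hf0. ring. }
  set (r := Cmod z0). assert (Hr : 0 < r) by (apply Cmod_gt_0, Z).
  pose proof (key_estimate f f' a2 Hd Hf0 Hf'0 Hd2 Hnz lambda HU z0 ltac:(lra) Hz0 Z) as K.
  rewrite z_over_f_nz, Ef in K by auto.
  replace ((z0 / - / (a2 + mu) - 1) / z0 + a2)%C with (- (1 + mu * z0) / z0)%C in K by (field; auto).
  rewrite Cmod_div, Cmod_opp in K by auto. fold r in K.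
  assert (Hup : Cmod (1 + mu * z0) <= lambda * r * r)
    by (apply (Rle_div_l (Cmod (1 + mu * z0)) (lambda * r) r) in K; lra).
  assert (Hlow : 1 - (1 - lambda) * r <= Cmod (1 + mu * z0)).
  { pose proof (Cmod_rev_triangle 1 (- (mu * z0))) as T.
    replace (1 - - (mu * z0))%C with (1 + mu * z0)%C in T by ring.
    rewrite Cmod_opp, Cmod_mult, Cmod_1 in T. fold r in T. pose proof (Cmod_ge_0 mu). nra. }
  assert (Hr1 : r < 1) by exact Hz0.
  assert (0 < (1 - r) * (1 + lambda * r)) by (apply Rmult_lt_0_compat; nra).
  nra.
Qed.

Theorem corollary1p2 (lambda : R) (f f' : C -> C) (a2 mu : C) :
  0 < lambda <= 1 ->
  classU lambda f f' ->
  (* a2 = f''(0)/2, i.e. the complex derivative of f' at 0 equals 2 * a2 *)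
  @is_derive C_AbsRing C_NormedModule f' (RtoC 0) (Cmult (RtoC 2) a2) ->
  Cmod mu <= 1 - lambda ->
  Cplus a2 mu <> RtoC 0 ->
  ~ (exists z : C, in_disk z /\ f z = Copp (Cinv (Cplus a2 mu))).
Proof.
  intros Hl [[Hd [Hf0 Hf'0]] [Hnz HU]] Hd2 Hmu Hs.
  apply (no_minus_inv_value f f' a2 mu lambda); auto.
  - intros w Hw. apply is_derive_has_cderiv, Hd, Hw.
  - apply is_derive_has_cderiv, Hd2.
Qed.
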